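(* Let $q$ be prime, $N \leq \frac{q}{\log^2 q}$, $H = \sqrt{Nq}\log q$ and $x = \frac{1}{2\log q}\sqrt{\frac{q}{N}}$. For a Dirichlet character $\chi$ modulo $q$ set \[S(\chi) = \sum_{\substack{|h| \leq H\\ h \neq 0}} \frac{\chi(h)}{h}\left(1 - \cos\!\left(\frac{2\pi h}{N}\right)\right).\] Let $r$ be a non-negative multiplicative function supported on squarefree numbers not divisible by $q$. Then \[\sup_{\chi \neq \chi_0} |S(\chi)|^2 \gg \frac{1}{N} \sum_{\substack{m_1, m_2 \leq \min(x, N/2) \\ (m_1,m_2) = 1}} \frac{r(m_1)r(m_2)\, m_1m_2}{\max(m_1,m_2)^3} \sum_{\substack{g \leq x/\max(m_1,m_2)\\ (g,m_1m_2) = 1}} r(g)^2 \Bigg/ \prod_p \left(1 + r(p)^2\right),\] where the supremum is over non-principal characters modulo $q$, the product is over primes, and the implied constant is absolute. *)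

From Stdlib Require Import Reals Lra Lia ZArith Znumtheory List.
From Coquelicot Require Import Coquelicot.
From Stdlib Require Import Bool.
Open Scope R_scope.

Definition sumR {A : Type} (l : list A) (f : A -> R) : R :=
  fold_right Rplus 0 (map f l).
Definition sumC {A : Type} (l : list A) (f : A -> C) : C :=
  fold_right Cplus (RtoC 0) (map f l).

Definition Rleb (a b : R) : bool := if Rle_dec a b then true else false.

Definition Zrange_abs_le (H : R) : list Z :=
  let K := up (Rabs H) in
  filter (fun h => andb (Rleb (Rabs (IZR h)) H) (negb (Z.eqb h 0)))
    (map (fun k => (k - K)%Z) (map Z.of_nat (seq 0 (Z.to_nat (2 * K + 1))))).

Definition Nrange_le (B : R) : list nat :=
  filter (fun n => Rleb (INR n) B) (seq 1 (Z.to_nat (up (Rabs B)))).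

Definition dirichlet_char (q : Z) (chi : Z -> C) : Prop :=
  chi 1%Z = RtoC 1 /\
  (forall m n : Z, chi (m * n)%Z = Cmult (chi m) (chi n)) /\
  (forall n : Z, chi (n + q)%Z = chi n) /\
  (forall n : Z, Z.gcd n q <> 1%Z -> chi n = RtoC 0).

Definition principal_char (q : Z) (n : Z) : C :=
  if Z.eqb (Z.gcd n q) 1 then RtoC 1 else RtoC 0.

Definition non_principal (q : Z) (chi : Z -> C) : Prop :=
  exists n : Z, chi n <> principal_char q n.

Definition Hpar (q N : nat) : R := sqrt (INR N * INR q) * ln (INR q).
Definition xpar (q N : nat) : R := / (2 * ln (INR q)) * sqrt (INR q / INR N).

Definition Schi (q N : nat) (chi : Z -> C) : C :=
  sumC (Zrange_abs_le (Hpar q N))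
    (fun h => Cmult (Cdiv (chi h) (RtoC (IZR h)))
                    (RtoC (1 - cos (2 * PI * IZR h / INR N)))).

Definition is_prime_nat (p : nat) : Prop := prime (Z.of_nat p).
Definition squarefree (n : nat) : Prop :=
  forall d : nat, Nat.divide (d * d) n -> d = 1%nat.

Definition multiplicative (r : nat -> R) : Prop :=
  r 1%nat = 1 /\
  (forall m n : nat, Nat.gcd m n = 1%nat -> r (m * n)%nat = r m * r n).

Definition prime_partial_prod (r : nat -> R) (P : nat) : R :=
  fold_right Rmult 1
    (map (fun p => if prime_dec (Z.of_nat p) then 1 + r p ^ 2 else 1)
         (seq 1 P)).

(* the double sum on the right-hand side (without the factor 1/N
   and without the division by the Euler product) *)
Definition RHS_sum (q N : nat) (r : nat -> R) : R :=
  let x := xpar q N in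
  let B := Rmin x (INR N / 2) in
  sumR (Nrange_le B) (fun m1 =>
  sumR (Nrange_le B) (fun m2 =>
    if Nat.eqb (Nat.gcd m1 m2) 1 then
      let M := INR (Nat.max m1 m2) in
      r m1 * r m2 * INR m1 * INR m2 / M ^ 3 *
      sumR (Nrange_le (x / M)) (fun g =>
        if Nat.eqb (Nat.gcd g (m1 * m2)) 1 then r g ^ 2 else 0)
    else 0)).

(* Resonance method.  Write [q = 2 Qn + 1]; for odd [k], the character [chi_k] sending a fixed
   primitive root to [exp(pi i k / Qn)] is odd.  With the resonator [R(chi) = sum_{m <= x} r(m) chi(m)],
     [sum_k |S(chi_k)|^2 |R(chi_k)|^2 <= M sum_k |R(chi_k)|^2].
   Since [H x = q / 2], all the products [h m] occurring have absolute value below [q / 2], where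
   the odd characters are orthogonal up to the sign [chi(-1) = -1].  Hence the right side is at most
   [Qn M sum_m r(m)^2], while the left side is at least
   [Qn sum_{m1, m2} r(m1) r(m2) sum_{h1 m1 = h2 m2} a(h1) a(h2)] with [a(h) = (1 - cos(2 pi h / N)) / h],
   because [a(h1) a(h2) <= 0] whenever [h1 m1 = - h2 m2].  Writing [m1 = g u], [m2 = g v] with [u, v]
   coprime and keeping only [h1 = k v], [h2 = k u] for [k <= N / (2 max(u, v))], the bound
   [1 - cos t >= t^2 / 18] makes the inner sum at least [u v / (48 N max(u, v)^3)].  Finally
   [sum_{m <= x} r(m)^2 <= prod_p (1 + r(p)^2)] as [r] is multiplicative and supported on squarefree
   numbers; the constant is [1 / 48]. *)

From Stdlib Require Import Reals ZArith Znumtheory Lra Lia List Bool Classical.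
From Coquelicot Require Import Coquelicot.
From mathcomp Require all_boot all_algebra cyclic finfield zify.

Module PrimitiveRootModP.
Import all_boot all_algebra cyclic finfield zify.
Import GRing.Theory.
Local Open Scope ring_scope.

Lemma Fp_nat_eq {p : nat} (pr : prime p) (a b : nat) :
  ((a%:R : 'F_p) == b%:R) = (a == b %[mod p])%N.
Proof.
apply/eqP/eqP => [H|H].
- by rewrite -(val_Fp_nat pr) H (val_Fp_nat pr).
- by apply: val_inj; rewrite /= !(val_Fp_nat pr).
Qed.

Lemma Fp_fermat {p : nat} (pr : prime p) (x : 'F_p) : x != 0 -> x ^+ p.-1 = 1.
Proof.
move=> nz; apply: (mulfI nz); rewrite mulr1 -exprS prednK ?prime_gt0 //.
by have := expf_card x; rewrite card_Fp.
Qed.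

Lemma prime_primitive_root {p : nat} : prime p -> exists g : nat,
  (forall i j, (g ^ i == g ^ j %[mod p]) = (i == j %[mod p.-1]))%N /\
  (forall a, ~~ (p %| a)%N -> exists2 i, (i < p.-1)%N & (g ^ i = a %[mod p])%N).
Proof.
move=> pr; have p_gt1 := prime_gt1 pr.
have n_gt0 : (0 < p.-1)%N by rewrite -ltnS prednK ?(ltnW p_gt1).
pose rs := [seq x <- enum 'F_p | x != 0].
have hall : all (p.-1).-unity_root rs.
  by apply/allP => x; rewrite mem_filter unity_rootE => /andP [/(Fp_fermat pr) ->].
have hu : uniq rs by rewrite filter_uniq ?enum_uniq.
have hs : (p.-1 <= size rs)%N.
  have := count_predC (fun x : 'F_p => x != 0) (enum 'F_p).
  rewrite -cardE card_Fp // size_filter.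
  have -> : count (predC (fun x : 'F_p => x != 0)) (enum 'F_p) = 1%N.
    rewrite -(@eq_count _ (pred1 0)) => [|y /=]; last by rewrite negbK.
    by rewrite count_uniq_mem ?enum_uniq // mem_enum.
  by rewrite addn1 => /(congr1 predn) /= ->.
case/hasP: (has_prim_root n_gt0 hall hu hs) => z _ zprim.
exists (val z).
have hz : ((val z)%:R : 'F_p) = z.
  apply: val_inj => /=; rewrite (val_Fp_nat pr) modn_small //.
  by apply: leq_trans (ltn_ord z) _; rewrite (Fp_cast pr).
split=> [i j|a na].
  by rewrite -Fp_nat_eq // !natrX hz (eq_prim_root_expr zprim).
have anz : (a%:R : 'F_p) != 0.
  by rewrite -(mulr0n 1) Fp_nat_eq // mod0n -/(dvdn p a).
have [i hi] := prim_rootP zprim (Fp_fermat pr _ anz).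
by exists i; [exact: ltn_ord | apply/eqP; rewrite -Fp_nat_eq // natrX hz -hi].
Qed.

Lemma Nat_pow_expn (m n : nat) : Nat.pow m n = expn m n.
Proof. by elim: n => [|n IH] //=; rewrite expnS IH. Qed.

Lemma Nat_mod_modn (m d : nat) : (0 < d)%N -> Nat.modulo m d = modn m d.
Proof.
move=> hd; symmetry; apply: (Nat.mod_unique m d (m %/ d)).
- by apply/ltP; rewrite ltn_mod.
- by rewrite {1}(divn_eq m d) mulnC.
Qed.

Lemma prime_of_Zprime {q : nat} : Znumtheory.prime (Z.of_nat q) -> prime q.
Proof.
move=> hp; apply/primeP; split.
- by have := Znumtheory.prime_ge_2 _ hp => h; apply/ltP; lia.
- move=> d /dvdnP [k hk].
  have hz : (Z.of_nat d | Z.of_nat q)%Z by exists (Z.of_nat k); rewrite hk -Nat2Z.inj_mul.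
  by case: (Znumtheory.prime_divisors _ hp _ hz) => [h|[h|[h|h]]]; lia.
Qed.

Lemma Zprime_primitive_root (q : nat) : Znumtheory.prime (Z.of_nat q) -> exists g : nat,
  (forall i j, Nat.modulo (Nat.pow g i) q = Nat.modulo (Nat.pow g j) q <->
               Nat.modulo i (Nat.sub q 1) = Nat.modulo j (Nat.sub q 1)) /\
  (forall a, Nat.modulo a q <> 0%N -> exists i, lt i (Nat.sub q 1) /\
               Nat.modulo (Nat.pow g i) q = Nat.modulo a q).
Proof.
move=> hp; have pr := prime_of_Zprime hp; have q_gt1 := prime_gt1 pr.
have q10 : (0 < q - 1)%N by rewrite subn_gt0.
have [g [gP gsurj]] := prime_primitive_root pr.
have q0 : (0 < q)%N by rewrite ltnW.
exists g; rewrite -!subn1 in gP gsurj *; split=> [i j|a].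
  rewrite !Nat_pow_expn !(Nat_mod_modn _ _ q0) !(Nat_mod_modn _ _ q10).
  by split=> /eqP h; apply/eqP; [rewrite -gP | rewrite gP].
rewrite (Nat_mod_modn _ _ q0) => ha.
have [i hi e] := gsurj a (introN eqP ha).
by exists i; split; [apply/ltP | rewrite Nat_pow_expn !(Nat_mod_modn _ _ q0)].
Qed.

End PrimitiveRootModP.

Import ListNotations.
Open Scope R_scope.

Lemma sumR_nil {A} (f : A -> R) : sumR [] f = 0.
Proof. reflexivity. Qed.

Lemma sumR_cons {A} (a : A) l f : sumR (a :: l) f = f a + sumR l f.
Proof. reflexivity. Qed.

Lemma sumR_app {A} (l1 l2 : list A) f : sumR (l1 ++ l2) f = sumR l1 f + sumR l2 f.
Proof. induction l1; simpl; [unfold sumR; simpl; lra|]. rewrite !sumR_cons, IHl1. lra. Qed.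

Lemma sumR_ext {A} (l : list A) f g : (forall x, In x l -> f x = g x) -> sumR l f = sumR l g.
Proof.
  induction l; intros H; [reflexivity|].
  rewrite !sumR_cons, H, IHl; [reflexivity | intros; apply H | ]; simpl; auto.
Qed.

Lemma sumR_le {A} (l : list A) f g : (forall x, In x l -> f x <= g x) -> sumR l f <= sumR l g.
Proof.
  induction l; intros H; [unfold sumR; simpl; lra|]. rewrite !sumR_cons.
  assert (f a <= g a) by (apply H; simpl; auto).
  assert (sumR l f <= sumR l g) by (apply IHl; intros; apply H; simpl; auto). lra.
Qed.

Lemma sumR_zero {A} (l : list A) : sumR l (fun _ => 0) = 0.
Proof. induction l; [reflexivity|]. rewrite sumR_cons, IHl; lra. Qed.

Lemma sumR_nonneg {A} (l : list A) f : (forall x, In x l -> 0 <= f x) -> 0 <= sumR l f.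
Proof. intros H. rewrite <- (sumR_zero l). now apply sumR_le. Qed.

Lemma sumR_scal {A} (l : list A) c f : sumR l (fun x => c * f x) = c * sumR l f.
Proof. induction l; [unfold sumR; simpl; lra|]. rewrite !sumR_cons, IHl. lra. Qed.

Lemma sumR_plus {A} (l : list A) f g : sumR l (fun x => f x + g x) = sumR l f + sumR l g.
Proof. induction l; [unfold sumR; simpl; lra|]. rewrite !sumR_cons, IHl. lra. Qed.

Lemma sumR_minus {A} (l : list A) f g : sumR l (fun x => f x - g x) = sumR l f - sumR l g.
Proof. induction l; [unfold sumR; simpl; lra|]. rewrite !sumR_cons, IHl. lra. Qed.

Lemma sumR_const {A} (l : list A) c : sumR l (fun _ => c) = INR (length l) * c.
Proof. induction l; [unfold sumR; simpl; lra|]. rewrite sumR_cons, IHl. simpl length. rewrite S_INR. lra. Qed.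

Lemma sumR_swap {A B} (l1 : list A) (l2 : list B) f :
  sumR l1 (fun a => sumR l2 (fun b => f a b)) = sumR l2 (fun b => sumR l1 (fun a => f a b)).
Proof.
  induction l1; simpl.
  - rewrite sumR_nil. symmetry. apply sumR_zero.
  - rewrite sumR_cons, IHl1, <- sumR_plus. apply sumR_ext. intros. now rewrite sumR_cons.
Qed.

Lemma sumR_mult {A B} (l1 : list A) (l2 : list B) f g :
  sumR l1 f * sumR l2 g = sumR l1 (fun a => sumR l2 (fun b => f a * g b)).
Proof.
  induction l1; [unfold sumR; simpl; lra|].
  rewrite !sumR_cons, <- IHl1, sumR_scal. lra.
Qed.

Lemma sumR_prod {A B} (l1 : list A) (l2 : list B) f :
  sumR (list_prod l1 l2) f = sumR l1 (fun a => sumR l2 (fun b => f (a, b))).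
Proof.
  induction l1; simpl; [reflexivity|].
  rewrite sumR_app, sumR_cons, IHl1. unfold sumR. now rewrite map_map.
Qed.

Lemma sumR_map {A B} (l : list A) (g : A -> B) f : sumR (map g l) f = sumR l (fun a => f (g a)).
Proof. unfold sumR. now rewrite map_map. Qed.

Lemma sumR_filter {A} (l : list A) p f :
  sumR (filter p l) f = sumR l (fun x => if p x then f x else 0).
Proof. induction l; [reflexivity|]. simpl filter. destruct (p a) eqn:E; rewrite ?sumR_cons, IHl, ?E; lra. Qed.

Lemma sumR_remove_le {A} (dec : forall x y : A, {x = y} + {x <> y}) (l : list A) f x :
  In x l -> (forall y, In y l -> 0 <= f y) -> sumR (remove dec x l) f + f x <= sumR l f.
Proof.
  induction l as [|a l IH]; intros Hin Hnn; [destruct Hin|].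
  simpl. destruct (dec x a) as [e|ne].
  - subst a. rewrite sumR_cons.
    destruct (in_dec dec x l) as [i|ni].
    + specialize (IH i (fun y h => Hnn y (or_intror h))).
      assert (0 <= f x) by (apply Hnn; simpl; auto). lra.
    + rewrite notin_remove by auto. lra.
  - rewrite !sumR_cons. destruct Hin as [e|i]; [congruence|].
    specialize (IH i (fun y h => Hnn y (or_intror h))). lra.
Qed.

Lemma sumR_le_inj {A B} (dec : forall x y : B, {x = y} + {x <> y})
  (l' : list A) (l : list B) (F : A -> R) (f : B -> R) (phi : A -> B) :
  NoDup l' ->
  (forall a, In a l' -> 0 <= F a) ->
  (forall b, In b l -> 0 <= f b) ->
  (forall a, In a l' -> F a <> 0 -> F a <= f (phi a) /\ In (phi a) l) ->
  (forall a b, In a l' -> In b l' -> F a <> 0 -> F b <> 0 -> phi a = phi b -> a = b) ->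
  sumR l' F <= sumR l f.
Proof.
  revert l. induction l' as [|a l' IH]; intros l Hnd HF Hf Hphi Hinj.
  - rewrite sumR_nil. now apply sumR_nonneg.
  - inversion Hnd as [|? ? Hna Hnd']; subst.
    rewrite sumR_cons.
    destruct (Req_dec (F a) 0) as [z|nz].
    + rewrite z. assert (sumR l' F <= sumR l f).
      { apply IH; auto. intros; apply HF; simpl; auto.
        intros; apply Hphi; simpl; auto. intros; apply Hinj; simpl; auto. }
      lra.
    + destruct (Hphi a (or_introl eq_refl) nz) as [H1 H2].
      pose proof (sumR_remove_le dec l f (phi a) H2 Hf) as Hr.
      assert (sumR l' F <= sumR (remove dec (phi a) l) f).
      { apply IH; auto.
        - intros; apply HF; simpl; auto.
        - intros b Hb. apply Hf. eapply in_remove; eauto.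
        - intros b Hb Fb. destruct (Hphi b (or_intror Hb) Fb) as [G1 G2]. split; auto.
          apply in_in_remove; auto. intros e. apply Hna.
          assert (b = a) by (apply Hinj; simpl; auto). now subst.
        - intros; apply Hinj; simpl; auto. }
      lra.
Qed.

Lemma sumC_fst {A} (l : list A) (f : A -> C) : fst (sumC l f) = sumR l (fun a => fst (f a)).
Proof. induction l; [reflexivity|]. unfold sumC, sumR in *. simpl. now rewrite IHl. Qed.

Lemma sumC_snd {A} (l : list A) (f : A -> C) : snd (sumC l f) = sumR l (fun a => snd (f a)).
Proof. induction l; [reflexivity|]. unfold sumC, sumR in *. simpl. now rewrite IHl. Qed.

Lemma Cmod_pow2 (z : C) : Cmod z ^ 2 = fst z ^ 2 + snd z ^ 2.
Proof. unfold Cmod. rewrite pow2_sqrt; [reflexivity|]. nra. Qed.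

Lemma Rleb_iff a b : Rleb a b = true <-> a <= b.
Proof. unfold Rleb. destruct (Rle_dec a b); split; intros; auto; try discriminate; contradiction. Qed.

Lemma up_Rabs_pos B : (0 < up (Rabs B))%Z.
Proof. destruct (archimed (Rabs B)) as [h _]. pose proof (Rabs_pos B). apply lt_IZR. simpl. lra. Qed.

Lemma INR_lt_up_Rabs B n : INR n <= B -> (n < Z.to_nat (up (Rabs B)))%nat.
Proof.
  intros hn. destruct (archimed (Rabs B)) as [h _]. pose proof (Rle_abs B).
  assert (INR n < IZR (up (Rabs B))) as E by lra.
  rewrite INR_IZR_INZ in E. apply lt_IZR in E. pose proof (up_Rabs_pos B). lia.
Qed.

Lemma In_Nrange_le B n : In n (Nrange_le B) <-> (1 <= n)%nat /\ INR n <= B.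
Proof.
  unfold Nrange_le. rewrite filter_In, in_seq, Rleb_iff. split.
  - intros [[h1 h2] h3]. now split.
  - intros [h1 h2]. pose proof (INR_lt_up_Rabs B n h2). repeat split; auto; lia.
Qed.

Lemma NoDup_Nrange_le B : NoDup (Nrange_le B).
Proof. apply NoDup_filter, seq_NoDup. Qed.

Lemma In_Zrange_abs_le H h : In h (Zrange_abs_le H) <-> h <> 0%Z /\ Rabs (IZR h) <= H.
Proof.
  unfold Zrange_abs_le. rewrite filter_In, in_map_iff, andb_true_iff, Rleb_iff, negb_true_iff, Z.eqb_neq.
  split; [tauto|]. intros [h1 h2]. repeat split; auto.
  set (K := up (Rabs H)).
  assert (Z.abs h < K)%Z.
  { apply lt_IZR. rewrite abs_IZR. destruct (archimed (Rabs H)). pose proof (Rle_abs H). unfold K. lra. }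
  exists (h + K)%Z. split; [ring|]. apply in_map_iff. exists (Z.to_nat (h + K)).
  split; [rewrite Z2Nat.id; lia|]. apply in_seq. lia.
Qed.

Lemma sumR_seq_padded (T1 T2 : nat) (P : nat -> bool) f :
  (forall n, (T1 < n)%nat -> P n = false) -> (T1 <= T2)%nat ->
  sumR (seq 1 T2) (fun n => if P n then f n else 0) = sumR (seq 1 T1) (fun n => if P n then f n else 0).
Proof.
  intros HP Hle. replace T2 with (T1 + (T2 - T1))%nat by lia. rewrite seq_app, sumR_app.
  rewrite (sumR_ext (seq (1 + T1) (T2 - T1)) _ (fun _ => 0)), sumR_zero; [ring|].
  intros n Hn. apply in_seq in Hn. now rewrite HP by lia.
Qed.

Lemma sumR_Nrange_le_seq B T f : B <= INR T ->
  sumR (Nrange_le B) f = sumR (seq 1 T) (fun n => if Rleb (INR n) B then f n else 0).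
Proof.
  intros HB. unfold Nrange_le. rewrite sumR_filter.
  set (T1 := Z.to_nat (up (Rabs B))).
  assert (HP : forall T', (forall n, INR n <= B -> (n <= T')%nat) ->
                 forall n, (T' < n)%nat -> Rleb (INR n) B = false).
  { intros T' hT' n hn. apply not_true_iff_false. rewrite Rleb_iff. intros h. specialize (hT' n h). lia. }
  destruct (Nat.le_ge_cases T1 T) as [h|h].
  - symmetry. apply sumR_seq_padded; auto. apply HP. intros n hn. pose proof (INR_lt_up_Rabs B n hn). lia.
  - apply sumR_seq_padded; auto. apply HP. intros n hn. apply INR_le. lra.
Qed.

Lemma one_minus_cos_ge t : 0 <= t <= PI -> t ^ 2 / 18 <= 1 - cos t.
Proof.
  intros [h1 h2]. pose proof PI_4.
  replace t with (2 * (t / 2)) at 2 by field. rewrite cos_2a_sin.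
  assert (Hs : t / 6 <= sin (t / 2)).
  { eapply Rle_trans; [|apply SIN; lra].
    assert (E : sin_lb (t / 2) = t / 2 * (1 - (t/2)^2/6 + (t/2)^4/120 - (t/2)^6/5040))
      by (unfold sin_lb, sin_approx, sin_term; simpl; field).
    rewrite E. assert (0 <= (t / 2) ^ 2 <= 4) by (split; nra).
    assert (1/3 <= 1 - (t/2)^2/6 + (t/2)^4/120 - (t/2)^6/5040) by nra.
    nra. }
  nra.
Qed.

Lemma sum_squares_ge (K : nat) : INR K ^ 3 / 3 <= sumR (seq 1 K) (fun k => INR k ^ 2).
Proof.
  assert (E : sumR (seq 1 K) (fun k => INR k ^ 2) = INR K * (INR K + 1) * (2 * INR K + 1) / 6).
  { induction K; [unfold sumR; simpl; lra|].
    rewrite seq_S, sumR_app, IHK, sumR_cons, sumR_nil. replace (1 + K)%nat with (S K) by lia.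
    rewrite S_INR. field. }
  rewrite E. pose proof (pos_INR K). nra.
Qed.

Lemma cos_add_2PI_Z x (z : Z) : cos (x + 2 * PI * IZR z) = cos x.
Proof.
  destruct (Z_le_gt_dec 0 z) as [h|h].
  - rewrite <- (Z2Nat.id z h), <- INR_IZR_INZ, <- (cos_period x (Z.to_nat z)). f_equal. ring.
  - rewrite <- (cos_period (x + 2 * PI * IZR z) (Z.to_nat (- z))).
    rewrite INR_IZR_INZ, Z2Nat.id, opp_IZR by lia. f_equal. ring.
Qed.

Lemma sin_add_2PI_Z x (z : Z) : sin (x + 2 * PI * IZR z) = sin x.
Proof.
  destruct (Z_le_gt_dec 0 z) as [h|h].
  - rewrite <- (Z2Nat.id z h), <- INR_IZR_INZ, <- (sin_period x (Z.to_nat z)). f_equal. ring.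
  - rewrite <- (sin_period (x + 2 * PI * IZR z) (Z.to_nat (- z))).
    rewrite INR_IZR_INZ, Z2Nat.id, opp_IZR by lia. f_equal. ring.
Qed.

(* [|sum_i w_i exp(i th_i)|^2] *)
Definition expsum_norm2 {A} (l : list A) (w th : A -> R) : R :=
  sumR l (fun i => w i * cos (th i)) ^ 2 + sumR l (fun i => w i * sin (th i)) ^ 2.

Lemma expsum_norm2_double {A} (l : list A) (w th : A -> R) :
  expsum_norm2 l w th = sumR l (fun i => sumR l (fun j => w i * w j * cos (th i - th j))).
Proof.
  unfold expsum_norm2. rewrite <- !Rsqr_pow2. unfold Rsqr. rewrite !sumR_mult, <- sumR_plus.
  apply sumR_ext. intros i _. rewrite <- sumR_plus. apply sumR_ext. intros j _.
  rewrite cos_minus. ring.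
Qed.

Lemma expsum_norm2_prod {A B} (l1 : list A) (l2 : list B) w1 w2 th1 th2 :
  expsum_norm2 (list_prod l1 l2) (fun p => w1 (fst p) * w2 (snd p)) (fun p => th1 (fst p) + th2 (snd p)) =
  expsum_norm2 l1 w1 th1 * expsum_norm2 l2 w2 th2.
Proof.
  unfold expsum_norm2. rewrite !sumR_prod.
  set (C1 := sumR l1 (fun i => w1 i * cos (th1 i))). set (S1 := sumR l1 (fun i => w1 i * sin (th1 i))).
  set (C2 := sumR l2 (fun i => w2 i * cos (th2 i))). set (S2 := sumR l2 (fun i => w2 i * sin (th2 i))).
  assert (Ec : sumR l1 (fun a => sumR l2 (fun b => w1 a * w2 b * cos (th1 a + th2 b))) = C1 * C2 - S1 * S2).
  { unfold C1, C2, S1, S2. rewrite !sumR_mult, <- sumR_minus. apply sumR_ext. intros a _.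
    rewrite <- sumR_minus. apply sumR_ext. intros b _. simpl. rewrite cos_plus. ring. }
  assert (Es : sumR l1 (fun a => sumR l2 (fun b => w1 a * w2 b * sin (th1 a + th2 b))) = S1 * C2 + C1 * S2).
  { unfold C1, C2, S1, S2. rewrite !sumR_mult, <- sumR_plus. apply sumR_ext. intros a _.
    rewrite <- sumR_plus. apply sumR_ext. intros b _. simpl. rewrite sin_plus. ring. }
  simpl. rewrite Ec, Es. ring.
Qed.

Lemma sin_mul_odd_cos_sum (x : R) (n : nat) :
  2 * sin x * sumR (seq 0 n) (fun j => cos ((2 * INR j + 1) * x)) = sin (2 * INR n * x).
Proof.
  induction n.
  - unfold sumR; simpl. replace (2 * 0 * x) with 0 by ring. rewrite sin_0. ring.
  - rewrite seq_S, sumR_app, Rmult_plus_distr_l, IHn, sumR_cons, sumR_nil, S_INR. simpl (0 + n)%nat.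
    replace (2 * (INR n + 1) * x) with ((2 * INR n + 1) * x + x) by ring.
    replace (2 * INR n * x) with ((2 * INR n + 1) * x - x) by ring.
    rewrite sin_plus, sin_minus. ring.
Qed.

Section OddCosineSum.
Variable Qn : nat.
Hypothesis HQn : (1 <= Qn)%nat.

Definition odd_below : list nat := map (fun j => (2 * j + 1)%nat) (seq 0 Qn).

Definition odd_cos_sum (t : Z) : R :=
  sumR odd_below (fun k => cos (PI * INR k * IZR t / INR Qn)).

Let theta (t : Z) : R := PI * IZR t / INR Qn.

Lemma odd_cos_sum_seq t : odd_cos_sum t = sumR (seq 0 Qn) (fun j => cos ((2 * INR j + 1) * theta t)).
Proof.
  unfold odd_cos_sum, odd_below, theta. rewrite sumR_map. apply sumR_ext. intros j _. f_equal.
  rewrite plus_INR, mult_INR. simpl. field. apply not_0_INR. lia.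
Qed.

Lemma odd_cos_sum_0 t : (t mod Z.of_nat Qn <> 0)%Z -> odd_cos_sum t = 0.
Proof.
  intros Ht. rewrite odd_cos_sum_seq.
  assert (HQ : INR Qn <> 0) by (apply not_0_INR; lia).
  assert (Hs : sin (theta t) <> 0).
  { intros E. apply sin_eq_0_0 in E as [k Hk]. apply Ht.
    assert (Et : IZR t = IZR (k * Z.of_nat Qn)).
    { rewrite mult_IZR, <- INR_IZR_INZ. apply (Rmult_eq_reg_l PI); [|apply PI_neq0].
      replace (PI * IZR t) with (theta t * INR Qn) by (unfold theta; field; auto). rewrite Hk. ring. }
    apply eq_IZR in Et. subst t. apply Z_mod_mult. }
  pose proof (sin_mul_odd_cos_sum (theta t) Qn) as E.
  replace (2 * INR Qn * theta t) with (0 + 2 * PI * IZR t) in E by (unfold theta; field; auto).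
  rewrite sin_add_2PI_Z, sin_0 in E.
  apply Rmult_integral in E as [E|E]; [|exact E]. exfalso. apply Hs. lra.
Qed.

Lemma odd_cos_sum_const t c (z : nat -> Z) :
  (forall j, (2 * INR j + 1) * theta t = c + 2 * PI * IZR (z j)) ->
  odd_cos_sum t = INR Qn * cos c.
Proof.
  intros Hz. rewrite odd_cos_sum_seq, (sumR_ext _ _ (fun _ => cos c)), sumR_const, length_seq; [ring|].
  intros j _. now rewrite Hz, cos_add_2PI_Z.
Qed.

Lemma odd_cos_sum_even t : (t mod (2 * Z.of_nat Qn) = 0)%Z -> odd_cos_sum t = INR Qn.
Proof.
  intros Ht. apply Z_div_exact_2 in Ht; [|lia]. set (s := (t / (2 * Z.of_nat Qn))%Z) in *.
  rewrite (odd_cos_sum_const t 0 (fun j => ((2 * Z.of_nat j + 1) * s)%Z)), cos_0; [ring|].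
  intros j. unfold theta. rewrite Ht, !mult_IZR, plus_IZR, mult_IZR, <- !INR_IZR_INZ. simpl.
  field. apply not_0_INR. lia.
Qed.

Lemma odd_cos_sum_odd t : (t mod (2 * Z.of_nat Qn) = Z.of_nat Qn)%Z -> odd_cos_sum t = - INR Qn.
Proof.
  intros Ht. set (s := (t / (2 * Z.of_nat Qn))%Z).
  assert (E : t = (2 * Z.of_nat Qn * s + Z.of_nat Qn)%Z).
  { pose proof (Z_div_mod_eq_full t (2 * Z.of_nat Qn)) as H0. now rewrite Ht in H0. }
  rewrite (odd_cos_sum_const t PI (fun j => ((2 * Z.of_nat j + 1) * s + Z.of_nat j)%Z)), cos_PI; [ring|].
  intros j. unfold theta. rewrite E, !plus_IZR, !mult_IZR, plus_IZR, mult_IZR, <- !INR_IZR_INZ. simpl.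
  field. apply not_0_INR. lia.
Qed.

Lemma odd_cos_sum_cases t :
  ((t mod (2 * Z.of_nat Qn) = 0)%Z /\ odd_cos_sum t = INR Qn) \/
  ((t mod (2 * Z.of_nat Qn) = Z.of_nat Qn)%Z /\ odd_cos_sum t = - INR Qn) \/
  ((t mod (2 * Z.of_nat Qn) <> 0)%Z /\ (t mod (2 * Z.of_nat Qn) <> Z.of_nat Qn)%Z /\ odd_cos_sum t = 0).
Proof.
  destruct (Z.eq_dec (t mod (2 * Z.of_nat Qn)) 0) as [e|e].
  { left. split; auto. now apply odd_cos_sum_even. }
  destruct (Z.eq_dec (t mod (2 * Z.of_nat Qn)) (Z.of_nat Qn)) as [e'|e'].
  { right; left. split; auto. now apply odd_cos_sum_odd. }
  right; right. repeat split; auto. apply odd_cos_sum_0.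
  intros h. apply Z.mod_divide in h as [c hc]; [|lia]. subst t.
  destruct (Z.Even_or_Odd c) as [[d hd]|[d hd]]; subst c.
  - apply e. replace (2 * d * Z.of_nat Qn)%Z with (d * (2 * Z.of_nat Qn))%Z by ring. apply Z_mod_mult.
  - apply e'. replace ((2 * d + 1) * Z.of_nat Qn)%Z with (Z.of_nat Qn + d * (2 * Z.of_nat Qn))%Z by ring.
    rewrite Z_mod_plus_full. apply Z.mod_small. lia.
Qed.

End OddCosineSum.

Definition primitive_root (q : nat) (g : Z) : Prop :=
  (forall i j : nat, (g ^ Z.of_nat i) mod Z.of_nat q = (g ^ Z.of_nat j) mod Z.of_nat q <->
                     (i mod (q - 1) = j mod (q - 1))%nat) /\
  (forall n : Z, (n mod Z.of_nat q <> 0)%Z ->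
     exists i : nat, (i < q - 1)%nat /\ (g ^ Z.of_nat i) mod Z.of_nat q = n mod Z.of_nat q).

Lemma primitive_root_exists (q : nat) : prime (Z.of_nat q) -> exists g, primitive_root q g.
Proof.
  intros hq. pose proof (prime_ge_2 _ hq).
  destruct (PrimitiveRootModP.Zprime_primitive_root q hq) as [g [gP gsurj]].
  assert (Pw : forall i, ((Z.of_nat g ^ Z.of_nat i) mod Z.of_nat q = Z.of_nat ((g ^ i) mod q))%Z).
  { intros i. now rewrite Nat2Z.inj_mod, Nat2Z.inj_pow. }
  exists (Z.of_nat g). split.
  - intros i j. rewrite !Pw, <- gP. split; intros h; [apply Nat2Z.inj in h|rewrite h]; auto.
  - intros n hn. set (a := Z.to_nat (n mod Z.of_nat q)).
    assert (ha : Z.of_nat a = (n mod Z.of_nat q)%Z)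
      by (unfold a; rewrite Z2Nat.id; [auto|apply Z.mod_pos_bound; lia]).
    assert (ham : (a mod q = a)%nat).
    { apply Nat.mod_small, Nat2Z.inj_lt. rewrite ha. apply Z.mod_pos_bound. lia. }
    destruct (gsurj a ltac:(rewrite ham; lia)) as [i [hi ei]].
    exists i. split; [lia|]. now rewrite Pw, ei, ham.
Qed.

Section OddCharacters.
Variables (q Qn : nat) (g : Z).
Hypothesis q_def : q = (2 * Qn + 1)%nat.
Hypothesis Qn_pos : (1 <= Qn)%nat.
Hypothesis q_prime : prime (Z.of_nat q).
Hypothesis g_prim : primitive_root q g.

Local Notation qZ := (Z.of_nat q).

Lemma qZ_ge2 : (2 <= qZ)%Z.
Proof. apply prime_ge_2, q_prime. Qed.

Lemma pow_mod_eq_iff i j :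
  (g ^ Z.of_nat i) mod qZ = (g ^ Z.of_nat j) mod qZ <-> (i mod (2 * Qn) = j mod (2 * Qn))%nat.
Proof. replace (2 * Qn)%nat with (q - 1)%nat by lia. apply g_prim. Qed.

Lemma mod_q_nonzero_mul m n : (m mod qZ <> 0)%Z -> (n mod qZ <> 0)%Z -> ((m * n) mod qZ <> 0)%Z.
Proof.
  intros Hm Hn E. pose proof qZ_ge2. apply Z.mod_divide in E; [|lia].
  destruct (prime_mult _ q_prime m n E) as [D|D]; apply Z.mod_divide in D; lia.
Qed.

Lemma pow_Qn_mod : (g ^ Z.of_nat Qn) mod qZ = (-1) mod qZ.
Proof.
  pose proof qZ_ge2. set (u := (g ^ Z.of_nat Qn)%Z).
  assert (Hu2 : ((u - 1) * (u + 1)) mod qZ = 0%Z).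
  { replace ((u - 1) * (u + 1))%Z with (g ^ Z.of_nat (2 * Qn) - g ^ Z.of_nat 0)%Z
      by (unfold u; replace (Z.of_nat (2 * Qn)) with (Z.of_nat Qn * 2)%Z by lia;
          rewrite Z.pow_mul_r, Z.pow_0_r by lia; ring).
    rewrite Zminus_mod. replace ((g ^ Z.of_nat (2 * Qn)) mod qZ) with ((g ^ Z.of_nat 0) mod qZ).
    - rewrite Z.sub_diag. apply Z.mod_0_l. lia.
    - symmetry. apply pow_mod_eq_iff. rewrite Nat.Div0.mod_same, Nat.Div0.mod_0_l. reflexivity. }
  apply Z.mod_divide in Hu2; [|lia].
  destruct (prime_mult _ q_prime _ _ Hu2) as [D|D]; apply Z.mod_divide in D; try lia.
  - exfalso. assert (E : (g ^ Z.of_nat Qn) mod qZ = (g ^ Z.of_nat 0) mod qZ).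
    { fold u. replace u with ((u - 1) + 1 * 1)%Z by ring. rewrite Zplus_mod, D. simpl.
      rewrite Z.mod_mod; lia. }
    apply pow_mod_eq_iff in E. rewrite Nat.mod_small, Nat.Div0.mod_0_l in E by lia. lia.
  - fold u. replace u with ((u + 1) + (-1))%Z by ring. rewrite Zplus_mod, D. simpl.
    now rewrite Z.mod_mod by lia.
Qed.

(* junk value [0] when [q] divides [n] *)
Definition dlog (n : Z) : nat :=
  hd 0%nat (filter (fun i => Z.eqb ((g ^ Z.of_nat i) mod qZ) (n mod qZ)) (seq 0 (2 * Qn))).

Lemma dlog_spec n : (n mod qZ <> 0)%Z ->
  (dlog n < 2 * Qn)%nat /\ (g ^ Z.of_nat (dlog n)) mod qZ = n mod qZ.
Proof.
  intros Hn. destruct (proj2 g_prim n Hn) as [i [Hi Ei]].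
  unfold dlog.
  remember (filter (fun i => Z.eqb ((g ^ Z.of_nat i) mod qZ) (n mod qZ)) (seq 0 (2 * Qn))) as l.
  assert (Hi_l : In i l) by (subst l; apply filter_In; rewrite in_seq, Z.eqb_eq; split; [lia|exact Ei]).
  destruct l as [|j l]; [destruct Hi_l|]. simpl.
  assert (In j (j :: l)) as Hj by (simpl; auto). rewrite Heql, filter_In, in_seq, Z.eqb_eq in Hj.
  split; [lia|tauto].
Qed.

Lemma dlog_unique n j : (j < 2 * Qn)%nat -> (g ^ Z.of_nat j) mod qZ = n mod qZ ->
  (n mod qZ <> 0)%Z -> dlog n = j.
Proof.
  intros Hj E Hn. destruct (dlog_spec n Hn) as [H1 H2].
  assert (Hmod : ((dlog n) mod (2 * Qn) = j mod (2 * Qn))%nat) by (apply pow_mod_eq_iff; congruence).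
  now rewrite !Nat.mod_small in Hmod by lia.
Qed.

Lemma dlog_mul m n : (m mod qZ <> 0)%Z -> (n mod qZ <> 0)%Z ->
  exists s : nat, (dlog m + dlog n = dlog (m * n) + s * (2 * Qn))%nat.
Proof.
  intros Hm Hn. pose proof (mod_q_nonzero_mul m n Hm Hn) as Hmn. pose proof qZ_ge2.
  destruct (dlog_spec m Hm) as [A1 A2], (dlog_spec n Hn) as [B1 B2], (dlog_spec _ Hmn) as [C1 C2].
  assert (E : ((dlog m + dlog n) mod (2 * Qn) = dlog (m * n) mod (2 * Qn))%nat).
  { apply pow_mod_eq_iff. rewrite C2, Nat2Z.inj_add, Z.pow_add_r by lia.
    rewrite Z.mul_mod, A2, B2, <- Z.mul_mod by lia. reflexivity. }
  rewrite (Nat.mod_small (dlog (m * n))) in E by lia.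
  exists ((dlog m + dlog n) / (2 * Qn))%nat.
  pose proof (Nat.div_mod (dlog m + dlog n) (2 * Qn)). lia.
Qed.

Lemma dlog_one : dlog 1 = 0%nat.
Proof. pose proof qZ_ge2. apply dlog_unique; [lia|reflexivity|rewrite Z.mod_1_l; lia]. Qed.

Lemma minus_one_mod_nonzero : ((-1) mod qZ <> 0)%Z.
Proof.
  pose proof qZ_ge2. rewrite <- (Z.mod_unique (-1) qZ (-1) (qZ - 1)); lia.
Qed.

Lemma dlog_minus_one : dlog (-1) = Qn.
Proof. apply dlog_unique; [lia|apply pow_Qn_mod|apply minus_one_mod_nonzero]. Qed.

Definition char_angle (k : nat) (n : Z) : R := PI * INR k * INR (dlog n) / INR Qn.

(* For odd [k] this is an odd character modulo [q]; it sends [g] to [exp(pi i k / Qn)]. *)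
Definition gen_char (k : nat) (n : Z) : C :=
  if Z.eqb (n mod qZ) 0 then RtoC 0 else (cos (char_angle k n), sin (char_angle k n)).

Lemma char_angle_mul k m n : (m mod qZ <> 0)%Z -> (n mod qZ <> 0)%Z ->
  exists z : Z, char_angle k m + char_angle k n = char_angle k (m * n) + 2 * PI * IZR z.
Proof.
  intros Hm Hn. destruct (dlog_mul m n Hm Hn) as [s Hs]. exists (Z.of_nat (k * s)).
  unfold char_angle. rewrite <- INR_IZR_INZ, mult_INR.
  apply (Rmult_eq_reg_r (INR Qn)); [|apply not_0_INR; lia].
  assert (E : INR (dlog m) + INR (dlog n) = INR (dlog (m * n)) + INR s * (2 * INR Qn)).
  { rewrite <- !plus_INR. replace 2 with (INR 2) by reflexivity. rewrite <- !mult_INR, <- plus_INR.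
    now f_equal. }
  replace ((PI * INR k * INR (dlog m) / INR Qn + PI * INR k * INR (dlog n) / INR Qn) * INR Qn)
    with (PI * INR k * (INR (dlog m) + INR (dlog n))) by (field; apply not_0_INR; lia).
  rewrite E. field. apply not_0_INR. lia.
Qed.

Lemma gen_char_dirichlet k : dirichlet_char (Z.of_nat q) (gen_char k).
Proof.
  pose proof qZ_ge2. unfold gen_char. split; [|split; [|split]].
  - rewrite Z.mod_1_l by lia. simpl Z.eqb. unfold char_angle. rewrite dlog_one. simpl INR.
    replace (PI * INR k * 0 / INR Qn) with 0 by (field; apply not_0_INR; lia).
    now rewrite cos_0, sin_0.
  - intros m n.
    destruct (Z.eqb_spec (m mod qZ) 0) as [Hm|Hm].
    { rewrite Z.mul_mod, Hm, Z.mod_0_l by lia. simpl. unfold Cmult, RtoC. simpl. f_equal; ring. }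
    destruct (Z.eqb_spec (n mod qZ) 0) as [Hn|Hn].
    { rewrite Z.mul_mod, Hn, Z.mul_0_r, Z.mod_0_l by lia. simpl. unfold Cmult, RtoC. simpl. f_equal; ring. }
    destruct (Z.eqb_spec ((m * n) mod qZ) 0) as [e|_]; [exfalso; exact (mod_q_nonzero_mul m n Hm Hn e)|].
    destruct (char_angle_mul k m n Hm Hn) as [z Hz].
    rewrite <- (cos_add_2PI_Z _ z), <- (sin_add_2PI_Z _ z), <- Hz, cos_plus, sin_plus.
    unfold Cmult. simpl. f_equal; ring.
  - intros n. assert (E : ((n + qZ) mod qZ = n mod qZ)%Z)
      by (rewrite <- (Z.mul_1_l qZ) at 1; apply Z_mod_plus_full).
    unfold char_angle, dlog. now rewrite E.
  - intros n Hg.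
    replace (n mod qZ)%Z with 0%Z; [reflexivity|].
    destruct (Z.eq_dec (n mod qZ) 0) as [e|ne]; auto. exfalso. apply Hg.
    apply Zgcd_1_rel_prime, rel_prime_sym, prime_rel_prime; auto.
    intros D. apply Z.mod_divide in D; lia.
Qed.

Lemma gen_char_nonprincipal k : Nat.odd k = true -> non_principal (Z.of_nat q) (gen_char k).
Proof.
  intros Hk. exists (-1)%Z. unfold gen_char, principal_char.
  pose proof minus_one_mod_nonzero as Hm.
  destruct (Z.eqb_spec ((-1) mod qZ) 0) as [e|_]; [contradiction|].
  replace (Z.gcd (-1) qZ) with 1%Z by (symmetry; rewrite (Z.gcd_opp_l 1); apply Z.gcd_1_l).
  simpl Z.eqb. unfold char_angle. rewrite dlog_minus_one.
  destruct (proj1 (Nat.odd_spec k) Hk) as [j Hj]. subst k.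
  replace (PI * INR (2 * j + 1) * INR Qn / INR Qn) with (PI + 2 * PI * IZR (Z.of_nat j)).
  - rewrite cos_add_2PI_Z, cos_PI. intros E. injection E. lra.
  - rewrite <- INR_IZR_INZ, plus_INR, mult_INR. simpl. field. apply not_0_INR. lia.
Qed.

Lemma small_mod_inj n1 n2 : (Z.abs n1 <= Z.of_nat Qn)%Z -> (Z.abs n2 <= Z.of_nat Qn)%Z ->
  (n1 mod qZ = n2 mod qZ)%Z -> n1 = n2.
Proof.
  intros H1 H2 E. pose proof qZ_ge2.
  assert (D : (qZ | n1 - n2)%Z).
  { apply Z.mod_divide; [lia|]. rewrite Zminus_mod, E, Z.sub_diag. apply Z.mod_0_l. lia. }
  destruct D as [c Hc]. rewrite q_def in Hc. assert (c = 0%Z) by nia. subst c. lia.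
Qed.

Lemma small_mod_nonzero z : z <> 0%Z -> (Z.abs z <= Z.of_nat Qn)%Z -> (z mod qZ <> 0)%Z.
Proof.
  intros nz b E. apply Z.mod_divide in E as [c ->]; [|lia]. rewrite q_def in b.
  destruct (Z.eq_dec c 0); [lia|]. rewrite Z.abs_mul in b. nia.
Qed.

Lemma pow_dlog_small z : z <> 0%Z -> (Z.abs z <= Z.of_nat Qn)%Z -> (g ^ Z.of_nat (dlog z)) mod qZ = z mod qZ.
Proof. intros nz b. apply dlog_spec, small_mod_nonzero; auto. Qed.

Lemma Nat_mod_eq_iff_Z a b m : (0 < m)%nat ->
  (a mod m = b mod m)%nat <-> ((Z.of_nat a - Z.of_nat b) mod Z.of_nat m = 0)%Z.
Proof.
  intros Hm. split; intros E.
  - rewrite Zminus_mod, <- !Nat2Z.inj_mod, E, Z.sub_diag. apply Z.mod_0_l. lia.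
  - apply Z.mod_divide in E as [c Hc]; [|lia].
    apply Nat2Z.inj. rewrite !Nat2Z.inj_mod.
    replace (Z.of_nat a) with (Z.of_nat b + c * Z.of_nat m)%Z by lia. apply Z_mod_plus_full.
Qed.

Lemma odd_cos_sum_log_diff (D1 D2 : nat) (n1 n2 : Z) :
  n1 <> 0%Z -> n2 <> 0%Z -> (Z.abs n1 <= Z.of_nat Qn)%Z -> (Z.abs n2 <= Z.of_nat Qn)%Z ->
  (g ^ Z.of_nat D1) mod qZ = n1 mod qZ -> (g ^ Z.of_nat D2) mod qZ = n2 mod qZ ->
  odd_cos_sum Qn (Z.of_nat D1 - Z.of_nat D2) =
    (if Z.eq_dec n1 n2 then INR Qn else 0) - (if Z.eq_dec n1 (- n2)%Z then INR Qn else 0).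
Proof.
  intros nz1 nz2 b1 b2 E1 E2. pose proof qZ_ge2.
  assert (m2 : (Z.of_nat (2 * Qn) = 2 * Z.of_nat Qn)%Z) by lia.
  assert (K1 : n1 = n2 <-> ((Z.of_nat D1 - Z.of_nat D2) mod (2 * Z.of_nat Qn) = 0)%Z).
  { rewrite <- m2, <- Nat_mod_eq_iff_Z, <- pow_mod_eq_iff, E1, E2 by lia.
    split; intros; [now subst|now apply small_mod_inj]. }
  assert (K2 : n1 = (- n2)%Z <-> ((Z.of_nat D1 - Z.of_nat D2) mod (2 * Z.of_nat Qn) = Z.of_nat Qn)%Z).
  { transitivity ((Z.of_nat D1 - Z.of_nat (D2 + Qn)) mod (2 * Z.of_nat Qn) = 0)%Z.
    - rewrite <- m2, <- Nat_mod_eq_iff_Z, <- pow_mod_eq_iff, E1, Nat2Z.inj_add, Z.pow_add_r by lia.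
      rewrite Z.mul_mod, E2, pow_Qn_mod, <- Z.mul_mod by lia.
      replace (n2 * -1)%Z with (- n2)%Z by ring.
      split; intros; [now subst|apply small_mod_inj; auto; lia].
    - rewrite Nat2Z.inj_add.
      set (t := (Z.of_nat D1 - Z.of_nat D2)%Z).
      replace (Z.of_nat D1 - (Z.of_nat D2 + Z.of_nat Qn))%Z with (t - Z.of_nat Qn)%Z by (unfold t; ring).
      split; intros Ht.
      + apply Z.mod_divide in Ht as [c Hc]; [|lia].
        replace t with (Z.of_nat Qn + c * (2 * Z.of_nat Qn))%Z by lia.
        rewrite Z_mod_plus_full. apply Z.mod_small. lia.
      + rewrite Zminus_mod, Ht, (Z.mod_small (Z.of_nat Qn)), Z.sub_diag by lia. apply Z.mod_0_l. lia. }
  set (t := (Z.of_nat D1 - Z.of_nat D2)%Z) in *.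
  destruct (odd_cos_sum_cases Qn Qn_pos t) as [[C1 C2]|[[C1 C2]|[C1 [C1' C2]]]]; rewrite C2.
  - apply K1 in C1. subst n2. destruct (Z.eq_dec n1 n1); [|congruence].
    destruct (Z.eq_dec n1 (- n1)%Z); [lia|]. ring.
  - apply K2 in C1. subst n1. destruct (Z.eq_dec (- n2)%Z n2); [lia|].
    destruct (Z.eq_dec (- n2)%Z (- n2)%Z); [|congruence]. ring.
  - destruct (Z.eq_dec n1 n2) as [e|e]; [apply K1 in e; contradiction|].
    destruct (Z.eq_dec n1 (- n2)%Z) as [e'|e']; [apply K2 in e'; contradiction|]. ring.
Qed.

(* Orthogonality of the odd characters.  [D i] may be any logarithm of [n i], such as a sum of
   logarithms of its factors, not only [dlog (n i)]. *)
Lemma sum_odd_expsum_norm2 {A} (l : list A) (w : A -> R) (D : A -> nat) (n : A -> Z) :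
  (forall i, In i l -> n i <> 0%Z /\ (Z.abs (n i) <= Z.of_nat Qn)%Z /\
                       (g ^ Z.of_nat (D i)) mod qZ = n i mod qZ) ->
  sumR (odd_below Qn) (fun k => expsum_norm2 l w (fun i => PI * INR k * INR (D i) / INR Qn)) =
  sumR l (fun i => sumR l (fun j => w i * w j *
     ((if Z.eq_dec (n i) (n j) then INR Qn else 0) - (if Z.eq_dec (n i) (- n j)%Z then INR Qn else 0)))).
Proof.
  intros Hl.
  rewrite (sumR_ext _ _ (fun k => sumR l (fun i => sumR l (fun j => w i * w j *
      cos (PI * INR k * IZR (Z.of_nat (D i) - Z.of_nat (D j)) / INR Qn))))).
  2: { intros k _. rewrite expsum_norm2_double. apply sumR_ext. intros i _. apply sumR_ext. intros j _.
       do 2 f_equal. rewrite minus_IZR, <- !INR_IZR_INZ. field. apply not_0_INR. lia. }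
  rewrite sumR_swap. apply sumR_ext. intros i hi. rewrite sumR_swap. apply sumR_ext. intros j hj.
  rewrite sumR_scal. f_equal.
  destruct (Hl i hi) as [a1 [a2 a3]], (Hl j hj) as [b1 [b2 b3]].
  now rewrite <- (odd_cos_sum_log_diff (D i) (D j) (n i) (n j)).
Qed.

End OddCharacters.

Section Coincidences.
Variables (N : nat) (H : R).

Definition S_coeff (h : Z) : R := (1 - cos (2 * PI * IZR h / INR N)) / IZR h.

Lemma S_coeff_ge (j : nat) : (1 <= j)%nat -> INR j <= INR N / 2 ->
  2 * INR j / INR N ^ 2 <= S_coeff (Z.of_nat j).
Proof.
  intros h1 h2. pose proof PI2_3_2. pose proof PI_RGT_0.
  assert (hj : 1 <= INR j) by (apply (le_INR 1); auto).
  assert (hN : 0 < INR N) by lra.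
  unfold S_coeff. rewrite <- INR_IZR_INZ.
  set (t := 2 * PI * INR j / INR N).
  assert (ht : 0 <= t <= PI).
  { unfold t. split; [apply Rmult_le_pos; [nra|apply Rlt_le, Rinv_0_lt_compat; auto]|].
    apply (Rmult_le_reg_r (INR N)); auto. unfold Rdiv. rewrite Rmult_assoc, Rinv_l by lra. nra. }
  pose proof (one_minus_cos_ge t ht) as Hc.
  apply (Rmult_le_reg_r (INR j)); [lra|].
  unfold Rdiv at 2. rewrite Rmult_assoc, Rinv_l, Rmult_1_r by lra.
  eapply Rle_trans; [|exact Hc]. unfold t.
  replace ((2 * PI * INR j / INR N) ^ 2 / 18) with (PI ^ 2 / 9 * (2 * INR j * INR j / INR N ^ 2)) by (field; lra).
  replace (2 * INR j / INR N ^ 2 * INR j) with (1 * (2 * INR j * INR j / INR N ^ 2)) by (field; lra).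
  apply Rmult_le_compat_r; [|nra]. apply Rmult_le_pos; [nra|]. apply Rlt_le, Rinv_0_lt_compat. nra.
Qed.

Lemma S_coeff_mul h1 h2 : h1 <> 0%Z -> h2 <> 0%Z ->
  S_coeff h1 * S_coeff h2 =
  (1 - cos (2 * PI * IZR h1 / INR N)) * (1 - cos (2 * PI * IZR h2 / INR N)) / IZR (h1 * h2).
Proof. intros n1 n2. unfold S_coeff. rewrite mult_IZR. field. split; apply not_0_IZR; auto. Qed.

Lemma S_coeff_mul_nonneg h1 h2 : (0 < h1 * h2)%Z -> 0 <= S_coeff h1 * S_coeff h2.
Proof.
  intros p. rewrite S_coeff_mul by lia. apply Rmult_le_pos.
  - pose proof (COS_bound (2 * PI * IZR h1 / INR N)). pose proof (COS_bound (2 * PI * IZR h2 / INR N)). nra.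
  - apply Rlt_le, Rinv_0_lt_compat, IZR_lt, p.
Qed.

Lemma S_coeff_mul_nonpos h1 h2 : (h1 * h2 < 0)%Z -> S_coeff h1 * S_coeff h2 <= 0.
Proof.
  intros p. rewrite S_coeff_mul by lia. unfold Rdiv. apply Rmult_le_0_l.
  - pose proof (COS_bound (2 * PI * IZR h1 / INR N)). pose proof (COS_bound (2 * PI * IZR h2 / INR N)). nra.
  - apply Rlt_le, Rinv_lt_0_compat, IZR_lt, p.
Qed.

Definition coincidence_sum (m1 m2 : nat) : R :=
  sumR (Zrange_abs_le H) (fun h1 => sumR (Zrange_abs_le H) (fun h2 =>
    if Z.eq_dec (h1 * Z.of_nat m1) (h2 * Z.of_nat m2) then S_coeff h1 * S_coeff h2 else 0)).

Lemma coincidence_term_nonneg h1 h2 (m1 m2 : nat) : (1 <= m1)%nat -> (1 <= m2)%nat ->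
  In h1 (Zrange_abs_le H) -> In h2 (Zrange_abs_le H) ->
  0 <= (if Z.eq_dec (h1 * Z.of_nat m1) (h2 * Z.of_nat m2) then S_coeff h1 * S_coeff h2 else 0).
Proof.
  intros hm1 hm2 [n1 _]%In_Zrange_abs_le [n2 _]%In_Zrange_abs_le.
  destruct (Z.eq_dec _ _); [apply S_coeff_mul_nonneg; nia|lra].
Qed.

Lemma coincidence_sum_nonneg (m1 m2 : nat) : (1 <= m1)%nat -> (1 <= m2)%nat -> 0 <= coincidence_sum m1 m2.
Proof.
  intros. apply sumR_nonneg. intros. apply sumR_nonneg. intros. now apply coincidence_term_nonneg.
Qed.

Lemma prod_Z_eq_dec : forall x y : Z * Z, {x = y} + {x <> y}.
Proof. decide equality; apply Z.eq_dec. Qed.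

(* The diagonal terms come from the coincidences [(k v) (g u) = (k u) (g v)]. *)
Lemma coincidence_sum_ge_diag (u v g K : nat) : (1 <= u)%nat -> (1 <= v)%nat -> (1 <= g)%nat ->
  INR K * INR (Nat.max u v) <= H ->
  sumR (seq 1 K) (fun k => S_coeff (Z.of_nat (k * v)) * S_coeff (Z.of_nat (k * u)))
  <= coincidence_sum (g * u) (g * v).
Proof.
  intros hu hv hg hK. unfold coincidence_sum.
  rewrite <- (sumR_prod _ _ (fun p => if Z.eq_dec (fst p * Z.of_nat (g * u)) (snd p * Z.of_nat (g * v))
                                       then S_coeff (fst p) * S_coeff (snd p) else 0)).
  apply (sumR_le_inj prod_Z_eq_dec _ _ _ _ (fun k => (Z.of_nat (k * v), Z.of_nat (k * u)))).
  - apply seq_NoDup.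
  - intros k hk. apply in_seq in hk. apply S_coeff_mul_nonneg. nia.
  - intros [h1 h2] hp. apply in_prod_iff in hp. apply coincidence_term_nonneg; try tauto; lia.
  - intros k hk _. apply in_seq in hk. simpl. split.
    + destruct (Z.eq_dec _ _) as [e|e]; [lra|]. exfalso. apply e. lia.
    + assert (Hin : forall w : nat, (1 <= w <= Nat.max u v)%nat -> In (Z.of_nat (k * w)) (Zrange_abs_le H)).
      { intros w hw. apply In_Zrange_abs_le. split; [lia|].
        rewrite <- INR_IZR_INZ, Rabs_pos_eq, mult_INR by apply pos_INR.
        eapply Rle_trans; [|apply hK].
        apply Rmult_le_compat; try apply pos_INR; apply le_INR; lia. }
      apply in_prod_iff. split; apply Hin; lia.
  - intros k k' _ _ _ _ E. injection E. intros _ E'. nia.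
Qed.

Lemma diag_sum_ge (u v K : nat) : (1 <= N)%nat -> (1 <= u)%nat -> (1 <= v)%nat ->
  INR K * INR (Nat.max u v) <= INR N / 2 -> INR N / (4 * INR (Nat.max u v)) <= INR K ->
  INR u * INR v / (48 * INR N * INR (Nat.max u v) ^ 3)
  <= sumR (seq 1 K) (fun k => S_coeff (Z.of_nat (k * v)) * S_coeff (Z.of_nat (k * u))).
Proof.
  intros N_pos hu hv KM KN. set (M := Nat.max u v) in *.
  assert (hN : 0 < INR N) by (apply lt_0_INR; lia).
  assert (hM : 1 <= INR M) by (apply (le_INR 1); unfold M; lia).
  assert (hu' : 1 <= INR u) by (apply (le_INR 1); auto).
  assert (hv' : 1 <= INR v) by (apply (le_INR 1); auto).
  set (c := 4 * INR u * INR v / INR N ^ 4).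
  assert (hc : 0 < c) by (unfold c; apply Rdiv_lt_0_compat; [nra|apply pow_lt; lra]).
  assert (Hterm : sumR (seq 1 K) (fun k => c * INR k ^ 2)
                  <= sumR (seq 1 K) (fun k => S_coeff (Z.of_nat (k * v)) * S_coeff (Z.of_nat (k * u)))).
  { apply sumR_le. intros k hk. apply in_seq in hk. pose proof (pos_INR k).
    assert (Hw : forall w, (w <= M)%nat -> INR (k * w) <= INR N / 2).
    { intros w hw. rewrite mult_INR. eapply Rle_trans; [|apply KM].
      apply Rmult_le_compat; try apply pos_INR; apply le_INR; lia. }
    pose proof (S_coeff_ge (k * v) ltac:(nia) (Hw v ltac:(unfold M; lia))) as A1.
    pose proof (S_coeff_ge (k * u) ltac:(nia) (Hw u ltac:(unfold M; lia))) as A2.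
    rewrite !mult_INR in A1, A2.
    assert (0 <= 2 * (INR k * INR v) / INR N ^ 2) by (apply Rmult_le_pos; [nra|]; apply Rlt_le, Rinv_0_lt_compat, pow_lt; lra).
    assert (0 <= 2 * (INR k * INR u) / INR N ^ 2) by (apply Rmult_le_pos; [nra|]; apply Rlt_le, Rinv_0_lt_compat, pow_lt; lra).
    eapply Rle_trans; [|apply Rmult_le_compat; [| |exact A1|exact A2]]; auto.
    right. unfold c. field. lra. }
  rewrite sumR_scal in Hterm.
  pose proof (sum_squares_ge K) as Hsq.
  assert (KR3 : (INR N / (4 * INR M)) ^ 3 <= INR K ^ 3)
    by (apply pow_incr; split; [apply Rlt_le, Rdiv_lt_0_compat; lra|auto]).
  replace (INR u * INR v / (48 * INR N * INR M ^ 3)) with (c * ((INR N / (4 * INR M)) ^ 3 / 3))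
    by (unfold c; field; lra).
  nra.
Qed.

Lemma block_count_exists (M : nat) : (1 <= M)%nat -> INR M <= INR N / 2 ->
  exists K : nat, INR K * INR M <= INR N / 2 /\ INR N / (4 * INR M) <= INR K.
Proof.
  intros hM hMN. exists (N / (2 * M))%nat.
  assert (hMR : 1 <= INR M) by (apply (le_INR 1); auto).
  pose proof (Nat.div_mod N (2 * M) ltac:(lia)) as D. pose proof (Nat.mod_upper_bound N (2 * M) ltac:(lia)).
  assert (K1 : (N / (2 * M) * (2 * M) <= N)%nat) by lia.
  assert (K2 : (N < (N / (2 * M) + 1) * (2 * M))%nat) by lia.
  assert (K0 : (1 <= N / (2 * M))%nat).
  { assert (2 * M <= N)%nat by (apply INR_le; rewrite mult_INR; simpl; lra).
    apply Nat.div_le_lower_bound; lia. }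
  apply le_INR in K1. apply lt_INR in K2. apply (le_INR 1) in K0.
  rewrite !mult_INR in K1. rewrite !mult_INR, plus_INR in K2. simpl (INR 1) in *. simpl (INR 2) in *.
  split; [lra|]. apply (Rmult_le_reg_r (4 * INR M)); [lra|]. unfold Rdiv. rewrite Rmult_assoc, Rinv_l by lra. nra.
Qed.

Lemma coincidence_sum_ge (u v g : nat) : (1 <= u)%nat -> (1 <= v)%nat -> (1 <= g)%nat ->
  INR u <= INR N / 2 -> INR v <= INR N / 2 -> INR N / 2 <= H ->
  INR u * INR v / (48 * INR N * INR (Nat.max u v) ^ 3) <= coincidence_sum (g * u) (g * v).
Proof.
  intros hu hv hg bu bv hH.
  assert (N_pos : (1 <= N)%nat) by (apply INR_le; apply (le_INR 1) in hu; simpl in *; lra).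
  destruct (block_count_exists (Nat.max u v)) as [K [KM KN]]; [lia|apply Nat.max_case; auto|].
  eapply Rle_trans; [apply (diag_sum_ge u v K); auto|].
  apply coincidence_sum_ge_diag; auto. lra.
Qed.

End Coincidences.

Lemma Nat_divide_Z a b : Nat.divide a b <-> (Z.of_nat a | Z.of_nat b)%Z.
Proof.
  split.
  - intros [k hk]. exists (Z.of_nat k). subst. lia.
  - intros [k hk]. destruct (Nat.eq_dec a 0) as [e|e].
    + subst. exists 0%nat. lia.
    + exists (Z.to_nat k). assert (0 <= k)%Z by nia. nia.
Qed.

Lemma prime_divisor_exists (m : nat) : (2 <= m)%nat -> exists p, prime (Z.of_nat p) /\ Nat.divide p m.
Proof.
  induction m as [m IH] using (well_founded_induction lt_wf). intros hm.
  destruct (prime_dec (Z.of_nat m)) as [pm|npm].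
  - exists m. split; auto. apply Nat.divide_refl.
  - destruct (not_prime_divide (Z.of_nat m) ltac:(lia) npm) as [n [hn dn]].
    destruct (IH (Z.to_nat n) ltac:(lia) ltac:(lia)) as [p [pp dp]].
    exists p. split; auto. apply Nat.divide_trans with (Z.to_nat n); auto.
    apply Nat_divide_Z. rewrite Z2Nat.id by lia. auto.
Qed.

Definition smooth (P m : nat) : Prop :=
  forall p, prime (Z.of_nat p) -> Nat.divide p m -> (p <= P)%nat.

Definition smoothb (P m : nat) : bool :=
  forallb (fun p => negb (if prime_dec (Z.of_nat p) then Nat.eqb (m mod p) 0 else false)) (seq (S P) m).

Lemma smoothb_spec P m : (1 <= m)%nat -> smoothb P m = true <-> smooth P m.
Proof.
  intros hm. unfold smoothb, smooth. rewrite forallb_forall. split.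
  - intros H p pp dp. destruct (Nat.le_gt_cases p P) as [h|h]; auto. exfalso.
    pose proof (prime_ge_2 _ pp).
    assert (pm : (p <= m)%nat) by (apply Nat.divide_pos_le; auto; lia).
    specialize (H p ltac:(apply in_seq; lia)).
    destruct (prime_dec (Z.of_nat p)) as [_|n]; [|contradiction].
    apply negb_true_iff, Nat.eqb_neq in H. apply H, Nat.Lcm0.mod_divide, dp.
  - intros H p hp. apply in_seq in hp. apply negb_true_iff.
    destruct (prime_dec (Z.of_nat p)) as [pp|_]; auto.
    apply Nat.eqb_neq. intros e. apply Nat.Lcm0.mod_divide in e. specialize (H p pp e). lia.
Qed.

Lemma smooth_0 m : (1 <= m)%nat -> smooth 0 m -> m = 1%nat.
Proof.
  intros hm Hs. destruct (Nat.eq_dec m 1) as [e|ne]; auto.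
  destruct (prime_divisor_exists m ltac:(lia)) as [p [pp dp]].
  specialize (Hs p pp dp). pose proof (prime_ge_2 _ pp). lia.
Qed.

Lemma smooth_mono P P' m : (P <= P')%nat -> smooth P m -> smooth P' m.
Proof. intros hP Hs p pp dp. specialize (Hs p pp dp). lia. Qed.

Lemma smooth_S_not_smooth P m : smooth (S P) m -> ~ smooth P m ->
  prime (Z.of_nat (S P)) /\ Nat.divide (S P) m.
Proof.
  intros Hs Hn. apply not_all_ex_not in Hn as [p Hn].
  apply imply_to_and in Hn as [pp Hn]. apply imply_to_and in Hn as [dp hp].
  specialize (Hs p pp dp). replace (S P) with p by lia. auto.
Qed.

Lemma smooth_S_cofactor P m : smooth (S P) (m * S P) -> ~ Nat.divide (S P) m -> smooth P m.
Proof.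
  intros Hs Hn p pp dp. assert (p <= S P)%nat by (apply Hs; auto; now apply Nat.divide_mul_l).
  destruct (Nat.eq_dec p (S P)); [subst; contradiction|lia].
Qed.

Lemma prime_coprime_nat p m : prime (Z.of_nat p) -> ~ Nat.divide p m -> Nat.gcd m p = 1%nat.
Proof.
  intros pp npm. pose proof (prime_ge_2 _ pp).
  assert (Hg : Nat.divide (Nat.gcd m p) p) by apply Nat.gcd_divide_r.
  apply Nat_divide_Z in Hg.
  destruct (prime_divisors _ pp _ Hg) as [h|[h|[h|h]]]; try lia.
  exfalso. apply npm. replace p with (Nat.gcd m p) by lia. apply Nat.gcd_divide_l.
Qed.

Lemma prime_partial_prod_S r P : prime_partial_prod r (S P) =
  prime_partial_prod r P * (if prime_dec (Z.of_nat (S P)) then 1 + r (S P) ^ 2 else 1).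
Proof.
  unfold prime_partial_prod. rewrite seq_S, map_app, fold_right_app. simpl.
  generalize (if prime_dec (Z.of_nat (S P)) then 1 + r (S P) ^ 2 else 1). intros c.
  induction (map _ (seq 1 P)) as [|a l IH]; simpl; [ring|]. rewrite IH. ring.
Qed.

Lemma prime_partial_prod_growing r : Un_growing (prime_partial_prod r).
Proof.
  intros P. rewrite prime_partial_prod_S. destruct (prime_dec _); [|lra].
  assert (1 <= prime_partial_prod r P).
  { clear p. induction P; [unfold prime_partial_prod; simpl; lra|].
    rewrite prime_partial_prod_S. destruct (prime_dec _); [|lra].
    pose proof (pow2_ge_0 (r (S P))). nra. }
  pose proof (pow2_ge_0 (r (S P))). nra.
Qed.

Section SmoothSums.
Variable r : nat -> R.
Hypothesis r_nonneg : forall n, 0 <= r n.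
Hypothesis r_mult : multiplicative r.
Hypothesis r_squarefree : forall n, (1 <= n)%nat -> ~ squarefree n -> r n = 0.

Let smooth_sum (P n : nat) : R := sumR (seq 1 n) (fun m => if smoothb P m then r m ^ 2 else 0).

(* Every [p]-smooth, not [(p-1)]-smooth [m] in the support of [r] is [m' p] with [m'] [(p-1)]-smooth. *)
Lemma smooth_sum_new_prime_le P n : prime (Z.of_nat (S P)) ->
  sumR (seq 1 n) (fun m => if smoothb (S P) m then (if smoothb P m then 0 else r m ^ 2) else 0)
  <= r (S P) ^ 2 * smooth_sum P n.
Proof.
  intros pp. set (p := S P) in *. pose proof (prime_ge_2 _ pp).
  destruct r_mult as [_ r_mul].
  assert (Hsupp : forall m, (1 <= m)%nat ->
            (if smoothb p m then (if smoothb P m then 0 else r m ^ 2) else 0) <> 0 ->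
            exists m', m = (m' * p)%nat /\ smoothb P m' = true /\ r m = r m' * r p).
  { intros m hm hne.
    destruct (smoothb p m) eqn:E1; [|lra]. destruct (smoothb P m) eqn:E2; [lra|].
    apply smoothb_spec in E1; [|lia]. rewrite <- not_true_iff_false, smoothb_spec in E2 by lia.
    assert (Hrm : r m <> 0) by (intros e; apply hne; rewrite e; ring).
    destruct (smooth_S_not_smooth P m E1 E2) as [_ [m' Hm]]. fold p in Hm. subst m.
    assert (npm : ~ Nat.divide p m').
    { intros [c ->]. apply Hrm, r_squarefree; [lia|].
      intros Hsq. assert (p = 1%nat) by (apply Hsq; exists c; ring). lia. }
    exists m'. split; auto. split.
    - apply smoothb_spec; [nia|]. now apply smooth_S_cofactor.
    - now rewrite r_mul by (now apply prime_coprime_nat). }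
  unfold smooth_sum. rewrite <- sumR_scal.
  apply (sumR_le_inj Nat.eq_dec _ _ _ _ (fun m => (m / p)%nat)).
  - apply seq_NoDup.
  - intros m _. destruct (smoothb p m); [destruct (smoothb P m)|]; try lra; apply pow2_ge_0.
  - intros m _. apply Rmult_le_pos; [apply pow2_ge_0|]. destruct (smoothb P m); [apply pow2_ge_0|lra].
  - intros m hm hne. apply in_seq in hm. destruct (Hsupp m ltac:(lia) hne) as [m' [-> [Hs Hr]]].
    rewrite Nat.div_mul, Hs by lia. destruct (smoothb p _); [|lra]. destruct (smoothb P _); [lra|].
    split; [rewrite Hr; right; ring|]. apply in_seq. nia.
  - intros m m' hm hm' h1 h2 E. apply in_seq in hm. apply in_seq in hm'.
    destruct (Hsupp m ltac:(lia) h1) as [c [-> _]], (Hsupp m' ltac:(lia) h2) as [c' [-> _]].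
    rewrite !Nat.div_mul in E by lia. now subst.
Qed.

Lemma smooth_sum_le_prime_partial_prod (P n : nat) : smooth_sum P n <= prime_partial_prod r P.
Proof.
  revert n. induction P; intros n.
  - change (prime_partial_prod r 0) with 1.
    apply Rle_trans with (sumR [1%nat] (fun m => r m ^ 2));
      [|rewrite sumR_cons, sumR_nil, (proj1 r_mult); lra].
    apply (sumR_le_inj Nat.eq_dec _ _ _ _ (fun _ => 1%nat)).
    + apply seq_NoDup.
    + intros m _. destruct (smoothb 0 m); [apply pow2_ge_0|lra].
    + intros b _. apply pow2_ge_0.
    + intros m hm hne. apply in_seq in hm.
      destruct (smoothb 0 m) eqn:E; [|lra]. apply smoothb_spec, smooth_0 in E; [|lia..].
      subst. simpl. split; [lra|auto].
    + intros m m' hm hm' h1 h2 _. apply in_seq in hm. apply in_seq in hm'.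
      destruct (smoothb 0 m) eqn:E; [|lra]. destruct (smoothb 0 m') eqn:E'; [|lra].
      apply smoothb_spec, smooth_0 in E; apply smoothb_spec, smooth_0 in E'; lia.
  - rewrite prime_partial_prod_S.
    assert (Hsplit : smooth_sum (S P) n = smooth_sum P n +
              sumR (seq 1 n) (fun m => if smoothb (S P) m then (if smoothb P m then 0 else r m ^ 2) else 0)).
    { unfold smooth_sum. rewrite <- sumR_plus. apply sumR_ext. intros m hm. apply in_seq in hm.
      destruct (smoothb P m) eqn:E1; destruct (smoothb (S P) m) eqn:E2; try ring.
      rewrite smoothb_spec in E1 by lia. rewrite <- not_true_iff_false, smoothb_spec in E2 by lia.
      exfalso. apply E2. apply (smooth_mono P); auto. }
    destruct (prime_dec (Z.of_nat (S P))) as [pp|npp].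
    + pose proof (smooth_sum_new_prime_le P n pp). specialize (IHP n).
      assert (0 <= smooth_sum P n).
      { apply sumR_nonneg. intros m _. destruct (smoothb P m); [apply pow2_ge_0|lra]. }
      pose proof (pow2_ge_0 (r (S P))). nra.
    + rewrite Hsplit, (sumR_ext _ _ (fun _ => 0)), sumR_zero, !Rmult_1_r, Rplus_0_r; auto.
      intros m hm. apply in_seq in hm.
      destruct (smoothb (S P) m) eqn:E1; destruct (smoothb P m) eqn:E2; auto.
      rewrite smoothb_spec in E1 by lia. rewrite <- not_true_iff_false, smoothb_spec in E2 by lia.
      exfalso. now apply npp, (smooth_S_not_smooth P m).
Qed.

Lemma sum_sq_le_limit (B L : R) : Un_cv (prime_partial_prod r) L ->
  sumR (Nrange_le B) (fun m => r m ^ 2) <= L.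
Proof.
  intros HL. destruct (INR_unbounded B) as [T HT].
  rewrite (sumR_Nrange_le_seq B T _ ltac:(lra)).
  eapply Rle_trans; [|eapply Rle_trans;
    [apply (smooth_sum_le_prime_partial_prod T T)|apply growing_ineq; auto; apply prime_partial_prod_growing]].
  apply sumR_le. intros m hm. apply in_seq in hm.
  replace (smoothb T m) with true.
  - destruct (Rleb _ _); [lra|apply pow2_ge_0].
  - symmetry. apply smoothb_spec; [lia|]. intros p pp dp. apply Nat.divide_pos_le in dp; lia.
Qed.

End SmoothSums.

Lemma prod_nat_eq_dec : forall x y : nat * nat, {x = y} + {x <> y}.
Proof. decide equality; apply Nat.eq_dec. Qed.

Lemma NoDup_list_prod {A B} (l1 : list A) (l2 : list B) :
  NoDup l1 -> NoDup l2 -> NoDup (list_prod l1 l2).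
Proof.
  induction l1 as [|a l1 IH]; intros H1 H2; simpl; [constructor|].
  inversion H1; subst. apply NoDup_app.
  - apply NoDup_map_NoDup_ForallPairs; auto. intros x y _ _ E. now injection E.
  - now apply IH.
  - intros [a' b] Hm Hn. apply in_map_iff in Hm as [b' [E _]]. injection E; intros; subst.
    apply in_prod_iff in Hn. tauto.
Qed.

Lemma Nat_gcd_mul_r_1 g u v : Nat.gcd g (u * v) = 1%nat -> Nat.gcd g u = 1%nat /\ Nat.gcd g v = 1%nat.
Proof.
  intros E. split; apply Nat.divide_1_r; rewrite <- E; apply Nat.gcd_greatest;
    try apply Nat.gcd_divide_l; eapply Nat.divide_trans; try apply Nat.gcd_divide_r.
  - apply Nat.divide_factor_l.
  - apply Nat.divide_factor_r.
Qed.

Section RHSReduction.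
Variables (q N : nat) (r : nat -> R).
Hypothesis N_pos : (1 <= N)%nat.
Hypothesis N_half_le_H : INR N / 2 <= Hpar q N.
Hypothesis r_nonneg : forall n, 0 <= r n.
Hypothesis r_mult : multiplicative r.

Local Notation x := (xpar q N).
Local Notation B := (Rmin (xpar q N) (INR N / 2)).

Definition rhs_summand (t : nat * nat * nat) : R :=
  let '((u, v), g) := t in
  if Nat.eqb (Nat.gcd u v) 1 then
    if Rleb (INR g) (x / INR (Nat.max u v)) then
      if Nat.eqb (Nat.gcd g (u * v)) 1 then
        r u * r v * INR u * INR v / INR (Nat.max u v) ^ 3 * r g ^ 2 / (48 * INR N)
      else 0
    else 0
  else 0.

Lemma RHS_sum_as_triple_sum (T : nat) : x <= INR T ->
  RHS_sum q N r / (48 * INR N) =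
  sumR (list_prod (list_prod (Nrange_le B) (Nrange_le B)) (seq 1 T)) rhs_summand.
Proof.
  intros HT. assert (0 < INR N) by (apply lt_0_INR; lia).
  rewrite !sumR_prod. unfold RHS_sum. cbv zeta.
  unfold Rdiv at 1. rewrite Rmult_comm, <- sumR_scal. apply sumR_ext. intros u [hu1 hu2]%In_Nrange_le.
  rewrite <- sumR_scal. apply sumR_ext. intros v [hv1 hv2]%In_Nrange_le.
  assert (hM : 1 <= INR (Nat.max u v)) by (apply (le_INR 1); lia).
  unfold rhs_summand. destruct (Nat.eqb (Nat.gcd u v) 1); [|rewrite sumR_zero; ring].
  rewrite (sumR_Nrange_le_seq _ T).
  - rewrite <- !sumR_scal. apply sumR_ext. intros g _.
    destruct (Rleb _ _); [destruct (Nat.eqb _ _)|]; field; lra.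
  - apply (le_INR 1) in hu1. pose proof (Rmin_l x (INR N / 2)).
    apply Rle_trans with x; [|exact HT]. apply Rmult_le_reg_r with (INR (Nat.max u v)); [lra|].
    unfold Rdiv. rewrite Rmult_assoc, Rinv_l by lra. simpl in hu1. nra.
Qed.

Lemma rhs_summand_nonneg u v g : (1 <= u)%nat -> 0 <= rhs_summand ((u, v), g).
Proof.
  intros hu. unfold rhs_summand.
  destruct (Nat.eqb _ _); [destruct (Rleb _ _); [destruct (Nat.eqb _ _)|]|]; try lra.
  assert (0 < INR (Nat.max u v) ^ 3) by (apply pow_lt, lt_0_INR; lia).
  assert (0 < INR N) by (apply lt_0_INR; lia).
  pose proof (pos_INR u). pose proof (pos_INR v). pose proof (r_nonneg u). pose proof (r_nonneg v).
  apply Rmult_le_pos; [|apply Rlt_le, Rinv_0_lt_compat; lra].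
  apply Rmult_le_pos; [|apply pow2_ge_0]. apply Rmult_le_pos; [|apply Rlt_le, Rinv_0_lt_compat; lra].
  repeat apply Rmult_le_pos; auto.
Qed.

Lemma rhs_summand_le u v g : (1 <= u)%nat -> (1 <= v)%nat -> (1 <= g)%nat ->
  INR u <= INR N / 2 -> INR v <= INR N / 2 -> rhs_summand ((u, v), g) <> 0 ->
  rhs_summand ((u, v), g) <= r (g * u)%nat * r (g * v)%nat * coincidence_sum N (Hpar q N) (g * u) (g * v)
  /\ INR (g * u) <= x /\ INR (g * v) <= x.
Proof.
  intros hu hv hg bu bv Hne. unfold rhs_summand in *.
  destruct (Nat.eqb_spec (Nat.gcd u v) 1) as [c1|c1]; [|lra].
  destruct (Rleb (INR g) (x / INR (Nat.max u v))) eqn:c2; [|lra].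
  destruct (Nat.eqb_spec (Nat.gcd g (u * v)) 1) as [c3|c3]; [|lra].
  apply Rleb_iff in c2. destruct (Nat_gcd_mul_r_1 g u v c3) as [gu gv].
  assert (0 < INR N) by (apply lt_0_INR; lia).
  assert (hM : 1 <= INR (Nat.max u v)) by (apply (le_INR 1); lia).
  assert (gx : forall w, (w <= Nat.max u v)%nat -> INR (g * w) <= x).
  { intros w hw. apply le_INR in hw. rewrite mult_INR.
    apply Rle_trans with (x / INR (Nat.max u v) * INR (Nat.max u v)).
    - apply Rmult_le_compat; auto; apply pos_INR.
    - right. field. lra. }
  split; [|split; apply gx; lia].
  destruct r_mult as [_ r_mul]. rewrite (r_mul g u gu), (r_mul g v gv).
  pose proof (coincidence_sum_ge N (Hpar q N) u v g hu hv hg bu bv N_half_le_H) as Hc.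
  assert (0 <= r u * r v * r g ^ 2) by (apply Rmult_le_pos; [apply Rmult_le_pos|apply pow2_ge_0]; auto).
  apply Rle_trans with (r u * r v * r g ^ 2 * (INR u * INR v / (48 * INR N * INR (Nat.max u v) ^ 3))).
  - right. field. split; lra.
  - replace (r g * r u * (r g * r v) * _)
      with (r u * r v * r g ^ 2 * coincidence_sum N (Hpar q N) (g * u) (g * v)) by ring.
    now apply Rmult_le_compat_l.
Qed.

(* [((u, v), g) |-> (g u, g v)] is injective on coprime pairs. *)
Lemma RHS_sum_le_coincidences :
  RHS_sum q N r / (48 * INR N) <=
  sumR (list_prod (Nrange_le x) (Nrange_le x))
    (fun p => r (fst p) * r (snd p) * coincidence_sum N (Hpar q N) (fst p) (snd p)).
Proof.
  destruct (INR_unbounded x) as [T HT]. rewrite (RHS_sum_as_triple_sum T) by lra.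
  assert (HB : B <= INR N / 2) by apply Rmin_r.
  apply (sumR_le_inj prod_nat_eq_dec _ _ _ _ (fun t => (snd t * fst (fst t), snd t * snd (fst t))%nat)).
  - repeat apply NoDup_list_prod; try apply NoDup_Nrange_le. apply seq_NoDup.
  - intros [[u v] g] [[[hu _]%In_Nrange_le _]%in_prod_iff _]%in_prod_iff. now apply rhs_summand_nonneg.
  - intros [m1 m2] [[hm1 _]%In_Nrange_le [hm2 _]%In_Nrange_le]%in_prod_iff. simpl.
    apply Rmult_le_pos; [apply Rmult_le_pos; auto|]. now apply coincidence_sum_nonneg.
  - intros [[u v] g] [[[hu1 hu2]%In_Nrange_le [hv1 hv2]%In_Nrange_le]%in_prod_iff hg%in_seq]%in_prod_iff Hne.
    destruct (rhs_summand_le u v g) as [Hle [Hu Hv]]; auto; try lia; try lra.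
    split; auto. simpl. apply in_prod_iff. split; apply In_Nrange_le; split; auto; nia.
  - intros [[u v] g] [[u' v'] g'] [_ hg%in_seq]%in_prod_iff [_ hg'%in_seq]%in_prod_iff Hne Hne' E.
    simpl in E. injection E as E1 E2. unfold rhs_summand in Hne, Hne'.
    destruct (Nat.eqb_spec (Nat.gcd u v) 1) as [c1|c1]; [|lra].
    destruct (Nat.eqb_spec (Nat.gcd u' v') 1) as [c1'|c1']; [|lra].
    assert (gg : g = g').
    { rewrite <- (Nat.mul_1_r g), <- (Nat.mul_1_r g'), <- c1 at 1. rewrite <- c1' at 1.
      rewrite <- !Nat.gcd_mul_mono_l. congruence. }
    subst g'. assert (u = u') by nia. assert (v = v') by nia. now subst.
Qed.

End RHSReduction.

Section Resonance.
Variables (q N Qn : nat) (g : Z) (r : nat -> R).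
Hypothesis q_def : q = (2 * Qn + 1)%nat.
Hypothesis Qn_pos : (1 <= Qn)%nat.
Hypothesis q_prime : prime (Z.of_nat q).
Hypothesis g_prim : primitive_root q g.
Hypothesis H_mul_x : Hpar q N * xpar q N = INR q / 2.
Hypothesis one_le_x : 1 <= xpar q N.
Hypothesis one_le_H : 1 <= Hpar q N.
Hypothesis r_nonneg : forall n, 0 <= r n.

Local Notation lH := (Zrange_abs_le (Hpar q N)).
Local Notation lx := (Nrange_le (xpar q N)).
Local Notation chi := (gen_char q Qn g).
Local Notation angle := (char_angle q Qn g).

(* This is where [H x = q / 2] enters: the products [h m] stay in the range where the odd
   characters are orthogonal. *)
Lemma small_products h m : In h lH -> In m lx ->
  h <> 0%Z /\ (1 <= m)%nat /\ (Z.abs (h * Z.of_nat m) <= Z.of_nat Qn)%Z.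
Proof.
  intros [h0 h1]%In_Zrange_abs_le [m1 m2]%In_Nrange_le. split; auto. split; auto.
  assert (E : Rabs (IZR h) * INR m <= INR q / 2)
    by (rewrite <- H_mul_x; apply Rmult_le_compat; auto; [apply Rabs_pos|apply pos_INR]).
  rewrite INR_IZR_INZ, <- (Rabs_pos_eq (IZR (Z.of_nat m))) in E by (apply IZR_le; lia).
  rewrite <- Rabs_mult, <- mult_IZR, <- abs_IZR, INR_IZR_INZ in E.
  assert (IZR (2 * Z.abs (h * Z.of_nat m)) <= IZR (Z.of_nat q)) as E2 by (rewrite mult_IZR; simpl; lra).
  apply le_IZR in E2. lia.
Qed.

Lemma one_in_lx : In 1%nat lx.
Proof. apply In_Nrange_le. simpl. split; [lia|lra]. Qed.

Lemma one_in_lH : In 1%Z lH.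
Proof. apply In_Zrange_abs_le. rewrite Rabs_R1. split; [lia|lra]. Qed.

Lemma small_h h : In h lH -> h <> 0%Z /\ (Z.abs h <= Z.of_nat Qn)%Z.
Proof. intros hh. destruct (small_products h 1 hh one_in_lx) as [h0 [_ hb]]. now rewrite Z.mul_1_r in hb. Qed.

Lemma small_m m : In m lx -> Z.of_nat m <> 0%Z /\ (Z.abs (Z.of_nat m) <= Z.of_nat Qn)%Z.
Proof. intros hm. destruct (small_products 1 m one_in_lH hm) as [_ [m1 hb]]. rewrite Z.mul_1_l in hb. split; [lia|auto]. Qed.

Lemma Schi_gen_char k : Cmod (Schi q N (chi k)) ^ 2 = expsum_norm2 lH (S_coeff N) (angle k).
Proof.
  rewrite Cmod_pow2. unfold expsum_norm2, Schi. rewrite sumC_fst, sumC_snd.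
  f_equal; f_equal; apply sumR_ext; intros h hh; destruct (small_h h hh) as [h0 hb];
    unfold gen_char; destruct (Z.eqb_spec (h mod Z.of_nat q) 0) as [e|_];
    try (exfalso; exact (small_mod_nonzero q Qn q_def Qn_pos h h0 hb e));
    unfold S_coeff, Cdiv, Cmult, Cinv, RtoC; simpl; field; apply not_0_IZR; auto.
Qed.

(* [|R(chi_k)|^2] for the resonator [R(chi) = sum_{m <= x} r(m) chi(m)] *)
Definition resonator_norm2 (k : nat) : R := expsum_norm2 lx r (fun m => angle k (Z.of_nat m)).

Lemma sum_resonator_norm2_le :
  sumR (odd_below Qn) resonator_norm2 <= INR Qn * sumR lx (fun m => r m ^ 2).
Proof.
  unfold resonator_norm2, char_angle.
  rewrite (sum_odd_expsum_norm2 q Qn g q_def Qn_pos q_prime g_prim lx r (fun m => dlog q Qn g (Z.of_nat m)) Z.of_nat).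
  2: { intros m hm. destruct (small_m m hm) as [m0 mb]. repeat split; auto. now apply pow_dlog_small. }
  rewrite <- sumR_scal. apply sumR_le. intros i hi.
  rewrite (sumR_ext _ _ (fun j => if Nat.eq_dec i j then INR Qn * (r i * r j) else
     r i * r j * ((if Z.eq_dec (Z.of_nat i) (Z.of_nat j) then INR Qn else 0) -
                  (if Z.eq_dec (Z.of_nat i) (- Z.of_nat j)%Z then INR Qn else 0)))).
  2: { intros j _. destruct (Nat.eq_dec i j) as [->|ne]; [|reflexivity].
       destruct (Z.eq_dec _ _); [|congruence]. destruct (Z.eq_dec _ _); [|ring].
       destruct (small_m j hi). lia. }
  apply Rle_trans with (sumR lx (fun j => if Nat.eq_dec i j then INR Qn * r i ^ 2 else 0)).
  - apply sumR_le. intros j _. pose proof (r_nonneg i). pose proof (r_nonneg j).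
    assert (0 <= INR Qn) by apply pos_INR. assert (0 <= r i * r j) by (apply Rmult_le_pos; auto).
    destruct (Nat.eq_dec i j) as [->|ne]; [nra|].
    destruct (Z.eq_dec _ _) as [e|_]; [lia|]. destruct (Z.eq_dec _ _); nra.
  - apply Rle_trans with (sumR [i] (fun j => INR Qn * r j ^ 2)); [|simpl; right; unfold sumR; simpl; ring].
    assert (0 <= INR Qn) by apply pos_INR.
    apply (sumR_le_inj Nat.eq_dec _ _ _ _ (fun _ => i)).
    + apply NoDup_Nrange_le.
    + intros j _. destruct (Nat.eq_dec i j); [pose proof (pow2_ge_0 (r i)); nra|lra].
    + intros j _. pose proof (pow2_ge_0 (r j)). nra.
    + intros j _ hne. destruct (Nat.eq_dec i j) as [->|]; [split; [lra|simpl; auto]|lra].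
    + intros j j' _ _ h1 h2 _. destruct (Nat.eq_dec i j), (Nat.eq_dec i j'); lra || congruence.
Qed.

Let pair_weight (p : Z * nat) : R := S_coeff N (fst p) * r (snd p).
Let pair_prod (p : Z * nat) : Z := (fst p * Z.of_nat (snd p))%Z.

Definition coincidence_total : R :=
  sumR (list_prod lH lx) (fun i => sumR (list_prod lH lx) (fun j =>
    if Z.eq_dec (pair_prod i) (pair_prod j) then pair_weight i * pair_weight j else 0)).

(* Pairs with [h m = - h' m'] contribute with sign [-], but then [S_coeff h S_coeff h' <= 0]. *)
Lemma coincidence_total_le_sum_odd :
  INR Qn * coincidence_total <=
  sumR (odd_below Qn) (fun k => expsum_norm2 (list_prod lH lx) pair_weight
                                  (fun p => angle k (fst p) + angle k (Z.of_nat (snd p)))).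
Proof.
  assert (HQ : INR Qn <> 0) by (apply not_0_INR; lia).
  rewrite (sumR_ext _ _ (fun k => expsum_norm2 (list_prod lH lx) pair_weight
     (fun p => PI * INR k * INR (dlog q Qn g (fst p) + dlog q Qn g (Z.of_nat (snd p))) / INR Qn))).
  2: { intros k _. unfold expsum_norm2. do 2 f_equal; apply sumR_ext; intros p _;
       unfold char_angle; rewrite plus_INR; do 2 f_equal; field; auto. }
  rewrite (sum_odd_expsum_norm2 q Qn g q_def Qn_pos q_prime g_prim _ pair_weight _ pair_prod).
  2: { intros [h m] [hh hm]%in_prod_iff. destruct (small_products h m hh hm) as [h0 [m1 hb]].
       destruct (small_h h hh) as [_ hb1], (small_m m hm) as [_ hb2].
       unfold pair_prod. simpl. split; [nia|split; auto].
       rewrite Nat2Z.inj_add, Z.pow_add_r, Z.mul_mod by lia.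
       rewrite !(pow_dlog_small q Qn g q_def Qn_pos g_prim) by (auto; lia).
       rewrite <- Z.mul_mod by lia. reflexivity. }
  unfold coincidence_total. rewrite <- sumR_scal. apply sumR_le. intros [h m] hi.
  rewrite <- sumR_scal. apply sumR_le. intros [h' m'] hj.
  apply in_prod_iff in hi as [hh hm]. apply in_prod_iff in hj as [hh' hm'].
  destruct (small_products h m hh hm) as [h0 [m1 _]], (small_products h' m' hh' hm') as [h0' [m1' _]].
  unfold pair_prod, pair_weight. simpl.
  destruct (Z.eq_dec (h * Z.of_nat m) (h' * Z.of_nat m')) as [e|e];
  destruct (Z.eq_dec (h * Z.of_nat m) (- (h' * Z.of_nat m'))%Z) as [e'|e']; [nia|lra| |lra].
  assert (S_coeff N h * r m * (S_coeff N h' * r m') <= 0).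
  { replace (S_coeff N h * r m * (S_coeff N h' * r m')) with (S_coeff N h * S_coeff N h' * (r m * r m')) by ring.
    apply Rmult_le_0_r; [apply S_coeff_mul_nonpos; nia|apply Rmult_le_pos; auto]. }
  assert (0 <= INR Qn) by apply pos_INR. nra.
Qed.

Lemma coincidence_total_le_bound (M : R) : 0 <= M ->
  (forall chi : Z -> C, dirichlet_char (Z.of_nat q) chi ->
       non_principal (Z.of_nat q) chi -> (Cmod (Schi q N chi)) ^ 2 <= M) ->
  coincidence_total <= M * sumR lx (fun m => r m ^ 2).
Proof.
  intros HM Hb. assert (Qp : 0 < INR Qn) by (apply lt_0_INR; lia).
  apply Rmult_le_reg_l with (INR Qn); auto.
  eapply Rle_trans; [apply coincidence_total_le_sum_odd|].
  apply Rle_trans with (M * sumR (odd_below Qn) resonator_norm2).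
  - rewrite <- sumR_scal. apply sumR_le. intros k hk.
    unfold pair_weight. rewrite (expsum_norm2_prod lH lx (S_coeff N) r (angle k) (fun m => angle k (Z.of_nat m))).
    assert (Hodd : Nat.odd k = true).
    { unfold odd_below in hk. apply in_map_iff in hk as [j [<- _]]. apply Nat.odd_spec. now exists j. }
    rewrite <- Schi_gen_char. apply Rmult_le_compat_r; [unfold resonator_norm2, expsum_norm2; nra|].
    apply Hb; [apply gen_char_dirichlet|apply gen_char_nonprincipal]; auto.
  - pose proof sum_resonator_norm2_le. nra.
Qed.

Lemma coincidence_total_eq : coincidence_total =
  sumR (list_prod lx lx) (fun p => r (fst p) * r (snd p) * coincidence_sum N (Hpar q N) (fst p) (snd p)).
Proof.
  unfold coincidence_total. rewrite !sumR_prod.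
  rewrite (sumR_ext lH _ (fun h1 => sumR lx (fun m1 => sumR lx (fun m2 => sumR lH (fun h2 =>
     if Z.eq_dec (h1 * Z.of_nat m1) (h2 * Z.of_nat m2) then S_coeff N h1 * r m1 * (S_coeff N h2 * r m2) else 0))))).
  2: { intros h1 _. apply sumR_ext. intros m1 _. rewrite sumR_prod, sumR_swap. reflexivity. }
  rewrite sumR_swap. apply sumR_ext. intros m1 _. rewrite sumR_swap. apply sumR_ext. intros m2 _.
  unfold coincidence_sum. simpl. rewrite <- sumR_scal. apply sumR_ext. intros h1 _.
  rewrite <- sumR_scal. apply sumR_ext. intros h2 _.
  destruct (Z.eq_dec _ _); ring.
Qed.

End Resonance.

Lemma RHS_sum_eq_0 q N r : Rmin (xpar q N) (INR N / 2) < 1 -> RHS_sum q N r = 0.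
Proof.
  intros hB. unfold RHS_sum. cbv zeta.
  rewrite (sumR_ext _ _ (fun _ => 0)); [apply sumR_zero|].
  intros u [h1 h2]%In_Nrange_le. apply (le_INR 1) in h1. simpl in h1. lra.
Qed.

Lemma Hpar_mul_xpar q N : (1 <= N)%nat -> (2 <= q)%nat -> Hpar q N * xpar q N = INR q / 2.
Proof.
  intros hN hq. apply (le_INR 1) in hN. apply (le_INR 2) in hq. simpl in hN, hq.
  assert (0 < ln (INR q)) by (rewrite <- ln_1; apply ln_increasing; lra).
  unfold Hpar, xpar.
  replace (sqrt (INR N * INR q) * ln (INR q) * (/ (2 * ln (INR q)) * sqrt (INR q / INR N)))
    with (sqrt (INR N * INR q) * sqrt (INR q / INR N) / 2) by (field; lra).
  rewrite <- sqrt_mult_alt by nra.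
  replace (INR N * INR q * (INR q / INR N)) with (INR q * INR q) by (field; lra).
  rewrite sqrt_square by lra. reflexivity.
Qed.

Lemma half_N_le_Hpar q N : (1 <= N)%nat -> (2 <= q)%nat -> 1 <= xpar q N -> INR N / 2 <= Hpar q N.
Proof.
  intros hN hq hx. apply (le_INR 1) in hN. apply (le_INR 2) in hq. simpl in hN, hq.
  pose proof ln_lt_2. assert (ln 2 <= ln (INR q)) by (apply Rcomplements.ln_le; lra).
  set (l := ln (INR q)) in *.
  assert (E : sqrt (INR N * INR q) = INR N * sqrt (INR q / INR N)).
  { replace (INR N * INR q) with ((INR N * INR N) * (INR q / INR N)) by (field; lra).
    rewrite sqrt_mult_alt, sqrt_square by nra. reflexivity. }
  assert (sx : 2 * l <= sqrt (INR q / INR N)).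
  { unfold xpar in hx. fold l in hx. apply Rmult_le_reg_l with (/ (2 * l)).
    - apply Rinv_0_lt_compat. lra.
    - rewrite Rinv_l by lra. lra. }
  assert (l2 : / 4 <= l * l) by nra.
  assert (INR N * (2 * l) * l <= INR N * sqrt (INR q / INR N) * l)
    by (apply Rmult_le_compat_r; [lra|]; apply Rmult_le_compat_l; lra).
  unfold Hpar. fold l. rewrite E. nra.
Qed.

Lemma xpar_2_lt_1 N : (2 <= N)%nat -> xpar 2 N < 1.
Proof.
  intros hN. apply (le_INR 2) in hN. simpl in hN. unfold xpar. change (INR 2) with 2.
  pose proof ln_lt_2.
  assert (0 <= sqrt (2 / INR N) <= 1).
  { split; [apply sqrt_pos|]. rewrite <- sqrt_1. apply sqrt_le_1_alt.
    apply Rmult_le_reg_r with (INR N); [lra|]. unfold Rdiv. rewrite Rmult_assoc, Rinv_l by lra. lra. }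
  assert (0 < / (2 * ln 2) < 1) by (split; [apply Rinv_0_lt_compat; lra|rewrite <- Rinv_1; apply Rinv_lt_contravar; lra]).
  nra.
Qed.

Lemma odd_prime_half (q : nat) : prime (Z.of_nat q) -> q <> 2%nat -> exists Qn, q = (2 * Qn + 1)%nat /\ (1 <= Qn)%nat.
Proof.
  intros hq hq2. pose proof (prime_ge_2 _ hq).
  destruct (Nat.Even_or_Odd q) as [[k hk]|[Qn hQn]]; [|exists Qn; lia].
  exfalso. assert (D : (2 | Z.of_nat q)%Z) by (exists (Z.of_nat k); lia).
  destruct (prime_divisors _ hq _ D) as [h|[h|[h|h]]]; lia.
Qed.

Lemma RHS_sum_le_resonance q N r L M :
  prime (Z.of_nat q) -> (1 <= N)%nat -> 1 <= Rmin (xpar q N) (INR N / 2) ->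
  (forall n, 0 <= r n) -> multiplicative r ->
  (forall n, (1 <= n)%nat -> ~ squarefree n -> r n = 0) ->
  Un_cv (prime_partial_prod r) L -> 0 <= M ->
  (forall chi : Z -> C, dirichlet_char (Z.of_nat q) chi ->
     non_principal (Z.of_nat q) chi -> (Cmod (Schi q N chi)) ^ 2 <= M) ->
  RHS_sum q N r / (48 * INR N) <= M * L.
Proof.
  intros Hq HN hB Hr Hmul Hsq HL HM Hb.
  assert (Hx : 1 <= xpar q N) by (eapply Rle_trans; [exact hB|apply Rmin_l]).
  assert (HN2 : INR N / 2 >= 1) by (pose proof (Rmin_r (xpar q N) (INR N / 2)); lra).
  assert (Hq2 : (2 <= q)%nat) by (pose proof (prime_ge_2 _ Hq); lia).
  assert (HH : INR N / 2 <= Hpar q N) by now apply half_N_le_Hpar.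
  destruct (odd_prime_half q Hq) as [Qn [q_def Qn_pos]].
  { intros ->. assert (N_ge2 : (2 <= N)%nat) by (apply INR_le; simpl; lra).
    pose proof (xpar_2_lt_1 N N_ge2). lra. }
  destruct (primitive_root_exists q Hq) as [g g_prim].
  pose proof (RHS_sum_le_coincidences q N r HN HH Hr Hmul) as Hlow.
  rewrite <- (coincidence_total_eq q N r) in Hlow.
  pose proof (coincidence_total_le_bound q N Qn g r q_def Qn_pos Hq g_prim (Hpar_mul_xpar q N HN Hq2)
                Hx ltac:(lra) Hr M HM Hb) as Hup.
  pose proof (sum_sq_le_limit r Hmul Hsq (xpar q N) L HL).
  nra.
Qed.

Theorem mainTheorem8 :
  exists c : R, 0 < c /\
  forall (q N : nat) (r : nat -> R),
    is_prime_nat q ->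
    (1 <= N)%nat ->
    INR N <= INR q / (ln (INR q)) ^ 2 ->
    (forall n, 0 <= r n) ->
    multiplicative r ->
    (forall n, (1 <= n)%nat -> (~ squarefree n \/ Nat.divide q n) -> r n = 0) ->
    forall L : R, Un_cv (prime_partial_prod r) L ->
    forall M : R, 0 <= M ->
    (forall chi : Z -> C, dirichlet_char (Z.of_nat q) chi ->
       non_principal (Z.of_nat q) chi -> (Cmod (Schi q N chi)) ^ 2 <= M) ->
    c * (/ INR N * RHS_sum q N r / L) <= M.
Proof.
  exists (1 / 48). split; [lra|].
  intros q N r Hq HN _ Hr Hmul Hsupp L HL M HM Hb.
  assert (0 < INR N) by (apply lt_0_INR; lia).
  assert (HL1 : 1 <= L).
  { change 1 with (prime_partial_prod r 0). apply growing_ineq; auto. apply prime_partial_prod_growing. }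
  replace (1 / 48 * (/ INR N * RHS_sum q N r / L)) with (RHS_sum q N r / (48 * INR N) / L) by (field; lra).
  apply Rmult_le_reg_r with L; [lra|]. unfold Rdiv at 1. rewrite Rmult_assoc, Rinv_l, Rmult_1_r by lra.
  destruct (Rlt_le_dec (Rmin (xpar q N) (INR N / 2)) 1) as [hB|hB].
  - rewrite RHS_sum_eq_0 by auto. unfold Rdiv. rewrite Rmult_0_l. nra.
  - apply RHS_sum_le_resonance; auto.
Qed.
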